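(* Let $n\in\mathbb{Z}$ with $|n|\geq1$, $\alpha>0$, $R>0$, $\kappa\in\mathbb{R}$. An element $u\in H$ is a nontrivial critical point of $\mathcal{I}_\kappa$ if and only if $u\in\mathcal{M}$ and $u$ is a critical point of the restriction $\mathcal{I}_\kappa|_{\mathcal{M}}$.
   Context: $H$ is the completion of $\{u\in C^1[0,R]: u(0)=0=u(R)\}$ with respect to the inner product $(u,\tilde u)=\int_0^R\{ru_r\tilde u_r+\frac1r u\tilde u\}dr$. $\mathcal{I}_\kappa(u)=\frac12\int_0^R\{ru_r^2+\frac{n^2}{r}u^2-2(\alpha^{-1}-\kappa)ru^2+2\alpha^{-2}r\ln(1+\alpha u^2)\}dr$, a $C^1$ (indeed $C^3$) functional on $H$. Define $\gamma_\kappa(u)=\frac12\langle \mathcal{I}_\kappa'(u),u\rangle=\frac12\int_0^R\{ru_r^2+\frac{n^2}{r}u^2-2(\alpha^{-1}-\kappa)ru^2+2\alpha^{-1}\frac{ru^2}{1+\alpha u^2}\}dr$ and the Nehari manifold $\mathcal{M}=\{u\in H\setminus\{0\}:\gamma_\kappa(u)=0\}$. A critical point of $\mathcal{I}_\kappa|_{\mathcal{M}}$ is a point $u\in\mathcal{M}$ for which there is $\xi\in\mathbb{R}$ with $\mathcal{I}_\kappa'(u)=\xi\gamma_\kappa'(u)$ in $H^{-1}$. *)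

From Stdlib Require Import Reals ZArith.
From Coquelicot Require Import Coquelicot.
Open Scope R_scope.

(* Functions are u : R -> R; only their values on [0,Rad] matter. *)

Definition cont_on (a b : R) (f : R -> R) : Prop :=
  forall x, a <= x <= b -> forall eps, 0 < eps ->
    exists delta, 0 < delta /\
      forall y, a <= y <= b -> Rabs (y - x) < delta -> Rabs (f y - f x) < eps.

Definition C1_0 (Rad : R) (f : R -> R) : Prop :=
  cont_on 0 Rad f /\
  (exists g, cont_on 0 Rad g /\
     forall x, 0 < x < Rad -> ex_derive f x /\ Derive f x = g x) /\
  f 0 = 0 /\ f Rad = 0.

Definition Hnorm2 (Rad : R) (f : R -> R) : R :=
  RInt (fun r => r * (Derive f r)^2 + (f r)^2 / r) 0 Rad.

(* The completion H is represented by Cauchy sequences (for the H-norm) of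
   elements of {u in C^1[0,R] : u(0)=0=u(R)}; all notions below are invariant
   under equivalence of Cauchy sequences. *)
Definition Hseq := nat -> R -> R.

Definition inH (Rad : R) (U : Hseq) : Prop :=
  (forall k, C1_0 Rad (U k)) /\
  forall eps, 0 < eps -> exists N, forall k m, (N <= k)%nat -> (N <= m)%nat ->
    Hnorm2 Rad (fun r => U k r - U m r) < eps.

Definition Hadd (U V : Hseq) : Hseq := fun k r => U k r + V k r.
Definition Hscal (c : R) (U : Hseq) : Hseq := fun k r => c * U k r.

Definition Hnorm (Rad : R) (U : Hseq) : R :=
  sqrt (real (Lim_seq (fun k => Hnorm2 Rad (U k)))).

Definition Ifun (n : Z) (alpha kappa Rad : R) (f : R -> R) : R :=
  1/2 * RInt (fun r => r * (Derive f r)^2 + (IZR n)^2 / r * (f r)^2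
                       - 2 * (/ alpha - kappa) * r * (f r)^2
                       + 2 * / alpha ^ 2 * r * ln (1 + alpha * (f r)^2)) 0 Rad.

Definition gfun (n : Z) (alpha kappa Rad : R) (f : R -> R) : R :=
  1/2 * RInt (fun r => r * (Derive f r)^2 + (IZR n)^2 / r * (f r)^2
                       - 2 * (/ alpha - kappa) * r * (f r)^2
                       + 2 * / alpha * (r * (f r)^2 / (1 + alpha * (f r)^2))) 0 Rad.

Definition IE (n : Z) (alpha kappa Rad : R) (U : Hseq) : R :=
  real (Lim_seq (fun k => Ifun n alpha kappa Rad (U k))).
Definition GE (n : Z) (alpha kappa Rad : R) (U : Hseq) : R :=
  real (Lim_seq (fun k => gfun n alpha kappa Rad (U k))).

Definition is_Fderiv (Rad : R) (F : Hseq -> R) (U : Hseq) (L : Hseq -> R) : Prop :=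
  (forall H1 H2, inH Rad H1 -> inH Rad H2 -> L (Hadd H1 H2) = L H1 + L H2) /\
  (forall c H, inH Rad H -> L (Hscal c H) = c * L H) /\
  (exists C, forall H, inH Rad H -> Rabs (L H) <= C * Hnorm Rad H) /\
  (forall eps, 0 < eps -> exists delta, 0 < delta /\
     forall H, inH Rad H -> Hnorm Rad H < delta ->
       Rabs (F (Hadd U H) - F U - L H) <= eps * Hnorm Rad H).

Definition nontrivial_crit (n : Z) (alpha kappa Rad : R) (U : Hseq) : Prop :=
  Hnorm Rad U <> 0 /\
  exists L, is_Fderiv Rad (IE n alpha kappa Rad) U L /\
            forall H, inH Rad H -> L H = 0.

Definition inM (n : Z) (alpha kappa Rad : R) (U : Hseq) : Prop :=
  Hnorm Rad U <> 0 /\ GE n alpha kappa Rad U = 0.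

Definition crit_on_M (n : Z) (alpha kappa Rad : R) (U : Hseq) : Prop :=
  inM n alpha kappa Rad U /\
  exists xi L1 L2, is_Fderiv Rad (IE n alpha kappa Rad) U L1 /\
                   is_Fderiv Rad (GE n alpha kappa Rad) U L2 /\
                   forall H, inH Rad H -> L1 H = xi * L2 H.

From Stdlib Require Import Reals ZArith Lra Lia Psatz FunctionalExtensionality.
From Coquelicot Require Import Coquelicot.
Open Scope R_scope.

(* Both [I_kappa] and [gamma_kappa] have the form [F(u) = 1/2 B(u,u) + int_0^R r phi(u) dr], where
   [B(u,v) = int_0^R (r u' v' + n^2 u v / r - 2 (1/alpha - kappa) r u v)] and [phi'] is globally
   Lipschitz with [phi'(0) = 0]. The pointwise bound [u(r)^2 <= |u|_H^2] and Taylor's formula give,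
   uniformly on smooth functions, the estimates showing that [F] is Frechet differentiable with
   [F'(u) v = B(u,v) + int r phi'(u) v]; these estimates pass to the completion [H].
   Since [phi_I'(s) s = 2 phi_gamma(s)], one has [<I'(u), u> = 2 gamma(u)]: a nontrivial critical point
   of [I_kappa] lies on [M] and is critical for [I_kappa|M] with [xi = 0]. Conversely, on [M],
   [<gamma'(u), u> = -2 int r u^4 / (1 + alpha u^2)^2], and this is nonzero: otherwise, using
   [n^2 >= 1], [|u|_H^2 <= 2 gamma(u) + c int r u^2] along the approximating sequence, while
   [int r u^2 <= R^2 d + C(d) int r u^4 / (1 + alpha u^2)^2] for every [d > 0]. Testing [I'(u) = xi gamma'(u)] with [u] then forces [xi = 0]. *)

(* Coquelicot states integrands over its own structures; [change] exposes [R] to [ring]. *)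
Ltac Rring := match goal with |- ?a = ?b => change (@eq R a b) end; unfold Rdiv; ring.

(** * Continuity and integrals on [0, Rad] *)

Definition continuous_all (G : R -> R) := forall x, continuous G x.

Lemma continuous_of_eps_delta (f : R -> R) x :
  (forall eps, 0 < eps -> exists d, 0 < d /\ forall y, Rabs (y - x) < d -> Rabs (f y - f x) < eps) ->
  continuous f x.
Proof.
  intros H. apply continuity_pt_filterlim.
  intros eps Heps. destruct (H eps Heps) as [d [Hd Hy]].
  exists d; split; [lra|]. intros y [_ Hy2]. apply Hy. exact Hy2.
Qed.

Lemma eps_delta_of_continuous (f : R -> R) x : continuous f x ->
  forall eps, 0 < eps -> exists d, 0 < d /\ forall y, Rabs (y - x) < d -> Rabs (f y - f x) < eps.
Proof.
  intros H. apply continuity_pt_filterlim in H.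
  intros eps Heps. destruct (H eps Heps) as [d [Hd Hy]].
  exists d; split; [lra|]. intros y Hy2.
  destruct (Req_dec y x) as [->|Hne].
  - rewrite Rminus_eq_0, Rabs_R0; lra.
  - apply Hy. split; [split; [exact I| auto]| exact Hy2].
Qed.

Lemma continuous_all_plus f g : continuous_all f -> continuous_all g -> continuous_all (fun x => f x + g x).
Proof. intros Hf Hg x. apply (continuous_plus f g); auto. Qed.
Lemma continuous_all_mult f g : continuous_all f -> continuous_all g -> continuous_all (fun x => f x * g x).
Proof. intros Hf Hg x. apply (continuous_mult f g); auto. Qed.
Lemma continuous_all_const c : continuous_all (fun _ => c).
Proof. intros x. apply continuous_const. Qed.
Lemma continuous_all_id : continuous_all (fun x => x).
Proof. intros x. apply continuous_id. Qed.
Lemma continuous_all_comp f g : continuous_all f -> continuous_all g -> continuous_all (fun x => g (f x)).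
Proof. intros Hf Hg x. apply continuous_comp; auto. Qed.

Definition inner_continuous (Rad : R) (F : R -> R) :=
  exists G, continuous_all G /\ forall r, 0 < r < Rad -> F r = G r.

Lemma inner_continuous_plus Rad F1 F2 : inner_continuous Rad F1 -> inner_continuous Rad F2 -> inner_continuous Rad (fun r => F1 r + F2 r).
Proof.
  intros [G1 [H1 E1]] [G2 [H2 E2]]. exists (fun r => G1 r + G2 r); split.
  apply continuous_all_plus; auto. intros r Hr; rewrite E1, E2; auto.
Qed.
Lemma inner_continuous_mult Rad F1 F2 : inner_continuous Rad F1 -> inner_continuous Rad F2 -> inner_continuous Rad (fun r => F1 r * F2 r).
Proof.
  intros [G1 [H1 E1]] [G2 [H2 E2]]. exists (fun r => G1 r * G2 r); split.
  apply continuous_all_mult; auto. intros r Hr; rewrite E1, E2; auto.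
Qed.
Lemma inner_continuous_const Rad c : inner_continuous Rad (fun _ => c).
Proof. exists (fun _ => c); split; auto. apply continuous_all_const. Qed.
Lemma inner_continuous_id Rad : inner_continuous Rad (fun r => r).
Proof. exists (fun r => r); split; auto. apply continuous_all_id. Qed.
Lemma inner_continuous_comp Rad F phi : inner_continuous Rad F -> continuous_all phi -> inner_continuous Rad (fun r => phi (F r)).
Proof.
  intros [G [H E]] Hp. exists (fun r => phi (G r)); split.
  apply continuous_all_comp; auto. intros r Hr; rewrite E; auto.
Qed.
Lemma inner_continuous_ext Rad F1 F2 : inner_continuous Rad F1 -> (forall r, 0 < r < Rad -> F1 r = F2 r) -> inner_continuous Rad F2.
Proof.
  intros [G [H E]] Ee. exists G; split; auto. intros r Hr; rewrite <- Ee; auto.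
Qed.

Lemma inner_continuous_minus Rad F1 F2 : inner_continuous Rad F1 -> inner_continuous Rad F2 -> inner_continuous Rad (fun r => F1 r - F2 r).
Proof.
  intros H1 H2. apply inner_continuous_ext with (fun r => F1 r + (-1) * F2 r).
  apply inner_continuous_plus; auto. apply inner_continuous_mult; auto. apply inner_continuous_const. intros; ring.
Qed.
Lemma ex_RInt_inner_continuous Rad F : 0 <= Rad -> inner_continuous Rad F -> ex_RInt F 0 Rad.
Proof.
  intros HR [G [H E]]. apply ex_RInt_ext with G.
  - intros x Hx. rewrite Rmin_left in Hx by lra. rewrite Rmax_right in Hx by lra.
    symmetry; apply E; lra.
  - apply (@ex_RInt_continuous R_CompleteNormedModule). intros; apply H.
Qed.

Definition clamp (Rad x : R) := Rmax 0 (Rmin Rad x).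

Lemma clamp_in Rad x : 0 <= Rad -> 0 <= clamp Rad x <= Rad.
Proof. intros. unfold clamp, Rmax, Rmin. repeat destruct Rle_dec; lra. Qed.
Lemma clamp_id Rad x : 0 <= x <= Rad -> clamp Rad x = x.
Proof. intros. unfold clamp, Rmax, Rmin. repeat destruct Rle_dec; lra. Qed.
Lemma clamp_left Rad x : 0 <= Rad -> x <= 0 -> clamp Rad x = 0.
Proof. intros. unfold clamp, Rmax, Rmin. repeat destruct Rle_dec; lra. Qed.
Lemma clamp_right Rad x : 0 <= Rad -> Rad <= x -> clamp Rad x = Rad.
Proof. intros. unfold clamp, Rmax, Rmin. repeat destruct Rle_dec; lra. Qed.
Lemma clamp_lipschitz Rad x y : 0 <= Rad -> Rabs (clamp Rad y - clamp Rad x) <= Rabs (y - x).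
Proof. intros. unfold clamp, Rmax, Rmin. repeat destruct Rle_dec; unfold Rabs; repeat destruct Rcase_abs; lra. Qed.

Lemma continuous_all_clamp Rad g : 0 <= Rad -> cont_on 0 Rad g -> continuous_all (fun x => g (clamp Rad x)).
Proof.
  intros HR Hg x. apply continuous_of_eps_delta. intros eps Heps.
  destruct (Hg (clamp Rad x) (clamp_in Rad x HR) eps Heps) as [d [Hd Hy]].
  exists d; split; auto. intros y Hyx.
  apply Hy. apply clamp_in; auto. eapply Rle_lt_trans. apply clamp_lipschitz; auto. auto.
Qed.

Lemma cont_on_of_continuous_all Rad F : continuous_all F -> cont_on 0 Rad F.
Proof.
  intros H x _ eps Heps. destruct (eps_delta_of_continuous F x (H x) eps Heps) as [d [Hd Hy]].
  exists d; split; auto.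
Qed.

Lemma locally_open_interval (P : R -> Prop) a b x : a < x < b -> (forall t, a < t < b -> P t) -> locally x P.
Proof.
  intros Hx HP. assert (He : 0 < Rmin (x - a) (b - x)) by (apply Rmin_pos; lra).
  exists (mkposreal _ He). intros y Hy. apply HP.
  change (Rabs (y - x) < Rmin (x - a) (b - x)) in Hy.
  apply Rabs_def2 in Hy. destruct Hy as [Hy1 Hy2].
  pose proof (Rmin_l (x-a) (b-x)); pose proof (Rmin_r (x-a) (b-x)). lra.
Qed.

Lemma continuous_all_bounded (g : R -> R) a b : a <= b -> continuous_all g -> exists M, 0 <= M /\ forall c, a <= c <= b -> Rabs (g c) <= M.
Proof.
  intros Hab Hg.
  destruct (continuity_ab_maj g a b Hab) as [x1 [H1 _]]. intros; apply continuity_pt_filterlim, Hg.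
  destruct (continuity_ab_maj (fun x => - g x) a b Hab) as [x2 [H2 _]].
  intros; apply continuity_pt_filterlim. apply (continuous_opp g). apply Hg.
  exists (Rabs (g x1) + Rabs (g x2)). split. pose proof (Rabs_pos (g x1)); pose proof (Rabs_pos (g x2)); lra.
  intros c Hc. specialize (H1 c Hc); specialize (H2 c Hc).
  unfold Rabs; repeat destruct Rcase_abs; lra.
Qed.

Lemma continuous_all_mul_div (a b : R -> R) Ma Mb : continuous_all a -> continuous_all b ->
  (forall r, Rabs (a r) <= Ma * Rabs r) -> (forall r, Rabs (b r) <= Mb * Rabs r) -> 0 <= Ma -> 0 <= Mb ->
  continuous_all (fun r => a r * b r / r).
Proof.
  intros Ca Cb Ba Bb HMa HMb x. destruct (Req_dec x 0) as [->|Hx].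
  - apply continuous_of_eps_delta. intros eps Heps. exists (eps / (Ma * Mb + 1)). split.
    apply Rdiv_lt_0_compat; nra.
    intros y Hy. rewrite Rminus_0_r in Hy.
    assert (a 0 = 0). { specialize (Ba 0). rewrite Rabs_R0, Rmult_0_r in Ba. apply Rabs_eq_0. pose proof (Rabs_pos (a 0)); lra. }
    rewrite H. unfold Rdiv at 2. rewrite !Rmult_0_l, Rminus_0_r.
    destruct (Req_dec y 0) as [->|Hy0].
    + unfold Rdiv; rewrite Rinv_0, !Rmult_0_r, Rabs_R0; auto.
    + unfold Rdiv. rewrite !Rabs_mult, Rabs_inv.
      specialize (Ba y); specialize (Bb y).
      assert (0 < Rabs y) by (apply Rabs_pos_lt; auto).
      assert (Hq : Rabs (a y) * Rabs (b y) * / Rabs y <= Ma * Mb * Rabs y).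
      { apply Rmult_le_reg_r with (Rabs y); auto. rewrite Rmult_assoc, Rinv_l by lra.
        pose proof (Rabs_pos (a y)); pose proof (Rabs_pos (b y)).
        replace (Ma * Mb * Rabs y * Rabs y) with ((Ma * Rabs y) * (Mb * Rabs y)) by ring.
        rewrite Rmult_1_r. apply Rmult_le_compat; auto. }
      eapply Rle_lt_trans; [exact Hq|].
      apply Rlt_le_trans with ((Ma*Mb+1) * (eps / (Ma*Mb+1))).
      assert (0 < eps / (Ma*Mb+1)) by (apply Rdiv_lt_0_compat; nra).
      assert (0 <= Ma*Mb) by (apply Rmult_le_pos; auto). nra.
      right; field; nra.
  - apply (continuous_mult (fun r => a r * b r) (fun r => / r)).
    apply (continuous_mult a b); auto. apply continuous_Rinv; auto.
Qed.

Lemma discriminant_le A B C : 0 <= C -> (forall t, 0 <= A + 2 * t * B + t * t * C) -> B * B <= A * C.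
Proof.
  intros HC H. destruct HC as [Hc|Hc].
  - specialize (H (- B / C)).
    replace (A + 2 * (- B / C) * B + - B / C * (- B / C) * C) with (A - B * B / C) in H by (field; lra).
    assert (H0 : B * B / C <= A) by lra.
    apply Rmult_le_reg_r with (/ C). apply Rinv_0_lt_compat; lra.
    replace (A * C * / C) with A by (field; lra). unfold Rdiv in H0. lra.
  - subst. destruct (Req_dec B 0). subst; nra.
    specialize (H (-(Rabs A + 1) / (2 * B))).
    replace (A + 2 * (- (Rabs A + 1) / (2 * B)) * B + - (Rabs A + 1) / (2 * B) * (- (Rabs A + 1) / (2 * B)) * 0) with (A - (Rabs A + 1)) in H by (field; auto).
    pose proof (Rle_abs A). lra.
Qed.

Lemma RInt_lincomb (F G : R -> R) c1 c2 a b : ex_RInt F a b -> ex_RInt G a b ->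
  RInt (fun r => c1 * F r + c2 * G r) a b = c1 * RInt F a b + c2 * RInt G a b.
Proof.
  intros HF HG.
  assert (H1 : ex_RInt (fun r => c1 * F r) a b) by (apply (ex_RInt_scal F a b c1); auto).
  assert (H2 : ex_RInt (fun r => c2 * G r) a b) by (apply (ex_RInt_scal G a b c2); auto).
  transitivity (plus (RInt (fun r => c1 * F r) a b) (RInt (fun r => c2 * G r) a b)).
  exact (RInt_plus _ _ a b H1 H2).
  unfold plus; simpl. f_equal. exact (RInt_scal F a b c1 HF). exact (RInt_scal G a b c2 HG).
Qed.

Lemma RInt_scal_R (F : R -> R) c a b : ex_RInt F a b -> RInt (fun r => c * F r) a b = c * RInt F a b.
Proof. exact (RInt_scal F a b c). Qed.

Lemma ex_RInt_lincomb (F G : R -> R) c1 c2 a b : ex_RInt F a b -> ex_RInt G a b ->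
  ex_RInt (fun r => c1 * F r + c2 * G r) a b.
Proof.
  intros HF HG.
  apply (ex_RInt_plus (fun r => c1 * F r) (fun r => c2 * G r)).
  apply (ex_RInt_scal F a b c1); auto. apply (ex_RInt_scal G a b c2); auto.
Qed.

Lemma RInt_abs_le (F : R -> R) Rad c : 0 <= Rad -> ex_RInt F 0 Rad -> (forall r, 0 < r < Rad -> Rabs (F r) <= c) ->
  Rabs (RInt F 0 Rad) <= c * Rad.
Proof.
  intros HR HF Hb.
  assert (Hc : forall d : R, RInt (fun _ => d) 0 Rad = d * Rad).
  { intros d. rewrite RInt_const. unfold scal; simpl. unfold mult; simpl. ring. }
  assert (Hex : forall d : R, ex_RInt (fun _ : R => d) 0 Rad) by (intros; apply (@ex_RInt_const R_CompleteNormedModule)).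
  apply Rabs_le. split.
  - replace (- (c * Rad)) with ((- c) * Rad) by ring. rewrite <- Hc. apply RInt_le; auto. intros r Hr. specialize (Hb r Hr).
    apply Rabs_le_between in Hb. lra.
  - rewrite <- Hc. apply RInt_le; auto. intros r Hr. specialize (Hb r Hr). apply Rabs_le_between in Hb. lra.
Qed.

Lemma RInt_one Rad : RInt (fun _ => 1) 0 Rad = Rad.
Proof. rewrite RInt_const. unfold scal; simpl. unfold mult; simpl. ring. Qed.

(** * Functions in C^1_0[0, Rad] *)

(* [fh] and [gh] are continuous extensions of [f] and [f'] to all of [R], [fh] vanishing
   outside [0, Rad]; the bound [|fh r| <= M |r|] makes [fh r * hh r / r] continuous at [0]. *)
Record C1_ext (Rad : R) (f fh gh : R -> R) (M : R) : Prop := {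
  ext_f_continuous : continuous_all fh;
  ext_g_continuous : continuous_all gh;
  ext_eq : forall r, 0 <= r <= Rad -> f r = fh r;
  ext_derive : forall r, 0 < r < Rad -> ex_derive f r /\ Derive f r = gh r;
  ext_M_pos : 0 <= M;
  ext_lin_bound : forall r, Rabs (fh r) <= M * Rabs r;
  ext_left : forall r, r <= 0 -> fh r = 0;
  ext_right : forall r, Rad <= r -> fh r = 0
}.

Lemma C1_0_C1_ext Rad f : 0 < Rad -> C1_0 Rad f -> exists fh gh M, C1_ext Rad f fh gh M.
Proof.
  intros HR [Hc [[g [Hg Hd]] [H0 HRf]]].
  set (fh := fun x => f (clamp Rad x)). set (gh := fun x => g (clamp Rad x)).
  assert (Cfh : continuous_all fh) by (apply continuous_all_clamp; auto; lra).
  assert (Cgh : continuous_all gh) by (apply continuous_all_clamp; auto; lra).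
  destruct (continuous_all_bounded gh 0 Rad) as [M [HM HMb]]; auto; try lra.
  exists fh, gh, M. constructor; auto.
  - intros r Hr. unfold fh. rewrite clamp_id; auto.
  - intros r Hr. destruct (Hd r Hr) as [He Hde]. split; auto. unfold gh; rewrite clamp_id; auto; lra.
  - intros r. destruct (Rle_lt_dec r 0) as [Hr|Hr].
    + unfold fh. rewrite clamp_left, H0, Rabs_R0 by lra. pose proof (Rabs_pos r). nra.
    + set (s := Rmin Rad r).
      assert (Hs : 0 < s <= Rad) by (unfold s, Rmin; destruct Rle_dec; lra).
      assert (Hfs : fh r = fh s) by (unfold fh, s, clamp, Rmax, Rmin; repeat destruct Rle_dec; lra).
      destruct (MVT_gen fh 0 s gh) as [c [Hc1 Hc2]].
      * rewrite Rmin_left, Rmax_right by lra. intros x Hx.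
        destruct (Hd x) as [Hex Hdx]. lra.
        apply is_derive_ext_loc with f.
        apply locally_open_interval with 0 Rad. lra. intros t Ht. unfold fh. rewrite clamp_id; auto; lra.
        unfold gh. rewrite clamp_id by lra. rewrite <- Hdx. apply Derive_correct; auto.
      * intros; apply continuity_pt_filterlim, Cfh.
      * rewrite Rmin_left, Rmax_right in Hc1 by lra.
        assert (fh 0 = 0) by (unfold fh; rewrite clamp_id; auto; lra).
        rewrite Hfs. replace (fh s) with (gh c * s) by lra.
        rewrite Rabs_mult. specialize (HMb c ltac:(lra)).
        rewrite (Rabs_right s) by lra. rewrite (Rabs_right r) by lra.
        assert (s <= r) by (unfold s; apply Rmin_r).
        pose proof (Rabs_pos (gh c)). nra.
  - intros r Hr. unfold fh. rewrite clamp_left by lra. auto.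
  - intros r Hr. unfold fh. rewrite clamp_right by lra. auto.
Qed.

Lemma C1_ext_inner_continuous Rad f fh gh M : C1_ext Rad f fh gh M -> inner_continuous Rad f.
Proof. intros Hr. exists fh; split. apply (ext_f_continuous _ _ _ _ _ Hr). intros r Hr'. apply (ext_eq _ _ _ _ _ Hr); lra. Qed.
Lemma C1_ext_inner_continuous_Derive Rad f fh gh M : C1_ext Rad f fh gh M -> inner_continuous Rad (Derive f).
Proof. intros Hr. exists gh; split. apply (ext_g_continuous _ _ _ _ _ Hr). intros r Hr'. apply (ext_derive _ _ _ _ _ Hr); lra. Qed.
Lemma C1_ext_inner_continuous_mul_div Rad f fh gh M h hh kh N : C1_ext Rad f fh gh M -> C1_ext Rad h hh kh N ->
  inner_continuous Rad (fun r => f r * h r / r).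
Proof.
  intros H1 H2. exists (fun r => fh r * hh r / r); split.
  apply continuous_all_mul_div with M N; try apply H1; try apply H2.
  intros r Hr. rewrite (ext_eq _ _ _ _ _ H1), (ext_eq _ _ _ _ _ H2); auto; lra.
Qed.

Definition lincomb (c1 : R) (f1 : R -> R) (c2 : R) (f2 : R -> R) := fun r => c1 * f1 r + c2 * f2 r.

Lemma C1_ext_lincomb Rad c1 f1 fh1 gh1 M1 c2 f2 fh2 gh2 M2 :
  C1_ext Rad f1 fh1 gh1 M1 -> C1_ext Rad f2 fh2 gh2 M2 ->
  C1_ext Rad (lincomb c1 f1 c2 f2) (lincomb c1 fh1 c2 fh2) (lincomb c1 gh1 c2 gh2) (Rabs c1 * M1 + Rabs c2 * M2).
Proof.
  intros H1 H2. destruct H1 as [fc1 gc1 eq1 der1 Mpos1 bnd1 left1 right1].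
  destruct H2 as [fc2 gc2 eq2 der2 Mpos2 bnd2 left2 right2]. unfold lincomb. constructor.
  - apply continuous_all_plus; apply continuous_all_mult; auto; apply continuous_all_const.
  - apply continuous_all_plus; apply continuous_all_mult; auto; apply continuous_all_const.
  - intros r Hr. rewrite eq1, eq2; auto.
  - intros r Hr. destruct (der1 r Hr) as [E1 D1]. destruct (der2 r Hr) as [E2 D2].
    assert (Hd : is_derive (fun r => c1 * f1 r + c2 * f2 r) r (c1 * gh1 r + c2 * gh2 r)).
    { apply (is_derive_plus (fun r => c1 * f1 r) (fun r => c2 * f2 r)).
      apply is_derive_scal. rewrite <- D1; apply Derive_correct; auto.
      apply is_derive_scal. rewrite <- D2; apply Derive_correct; auto. }
    split. eexists; exact Hd. apply is_derive_unique; exact Hd.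
  - pose proof (Rabs_pos c1); pose proof (Rabs_pos c2). nra.
  - intros r. eapply Rle_trans. apply Rabs_triang. rewrite !Rabs_mult.
    specialize (bnd1 r); specialize (bnd2 r).
    pose proof (Rabs_pos c1); pose proof (Rabs_pos c2). nra.
  - intros r Hr. rewrite left1, left2; auto; ring.
  - intros r Hr. rewrite right1, right2; auto; ring.
Qed.

Lemma C1_ext_C1_0 Rad f fh gh M : 0 < Rad -> C1_ext Rad f fh gh M -> C1_0 Rad f.
Proof.
  intros HR H. destruct H as [fc1 gc1 eq1 der1 Mpos1 bnd1 left1 right1].
  refine (conj _ (conj _ (conj _ _))).
  - intros x Hx eps Heps. destruct (eps_delta_of_continuous fh x (fc1 x) eps Heps) as [d [Hd Hy]].
    exists d; split; auto. intros y Hy' Hyx. rewrite (eq1 y), (eq1 x); auto.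
  - exists gh. split. apply cont_on_of_continuous_all. exact gc1. exact der1.
  - rewrite eq1, left1; lra. 
  - rewrite eq1, right1; lra.
Qed.

Lemma C1_0_lincomb Rad c1 f1 c2 f2 : 0 < Rad -> C1_0 Rad f1 -> C1_0 Rad f2 -> C1_0 Rad (lincomb c1 f1 c2 f2).
Proof.
  intros HR H1 H2. destruct (C1_0_C1_ext Rad f1 HR H1) as [fh [gh [M Hr1]]].
  destruct (C1_0_C1_ext Rad f2 HR H2) as [hh [kh [N Hr2]]].
  eapply C1_ext_C1_0; eauto. eapply C1_ext_lincomb; eauto.
Qed.

Lemma Derive_lincomb Rad c1 f1 c2 f2 r : 0 < Rad -> C1_0 Rad f1 -> C1_0 Rad f2 -> 0 < r < Rad ->
  Derive (lincomb c1 f1 c2 f2) r = c1 * Derive f1 r + c2 * Derive f2 r.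
Proof.
  intros HR H1 H2 Hr. destruct (C1_0_C1_ext Rad f1 HR H1) as [fh [gh [M Hr1]]].
  destruct (C1_0_C1_ext Rad f2 HR H2) as [hh [kh [N Hr2]]].
  pose proof (C1_ext_lincomb Rad c1 f1 fh gh M c2 f2 hh kh N Hr1 Hr2) as H3.
  rewrite (proj2 (ext_derive _ _ _ _ _ H3 r Hr)), (proj2 (ext_derive _ _ _ _ _ Hr1 r Hr)), (proj2 (ext_derive _ _ _ _ _ Hr2 r Hr)).
  reflexivity.
Qed.

(** * The quadratic form *)

Definition bform_integrand (a1 a2 b : R) (f h : R -> R) :=
  fun r => a1 * (r * Derive f r * Derive h r) + a2 * (f r * h r / r) + b * (r * f r * h r).
Definition bform Rad a1 a2 b f h : R := RInt (bform_integrand a1 a2 b f h) 0 Rad.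

Lemma inner_continuous_bform_integrand Rad a1 a2 b f h : 0 < Rad -> C1_0 Rad f -> C1_0 Rad h -> inner_continuous Rad (bform_integrand a1 a2 b f h).
Proof.
  intros HR Hf Hh. destruct (C1_0_C1_ext Rad f HR Hf) as [fh [gh [M Hr1]]].
  destruct (C1_0_C1_ext Rad h HR Hh) as [hh [kh [N Hr2]]].
  unfold bform_integrand. apply inner_continuous_plus; [apply inner_continuous_plus|].
  - apply inner_continuous_mult. apply inner_continuous_const. apply inner_continuous_mult. apply inner_continuous_mult. apply inner_continuous_id.
    eapply C1_ext_inner_continuous_Derive; eauto. eapply C1_ext_inner_continuous_Derive; eauto.
  - apply inner_continuous_mult. apply inner_continuous_const. eapply C1_ext_inner_continuous_mul_div; eauto.
  - apply inner_continuous_mult. apply inner_continuous_const. apply inner_continuous_mult. apply inner_continuous_mult. apply inner_continuous_id.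
    eapply C1_ext_inner_continuous; eauto. eapply C1_ext_inner_continuous; eauto.
Qed.

Lemma ex_RInt_bform_integrand Rad a1 a2 b f h : 0 < Rad -> C1_0 Rad f -> C1_0 Rad h -> ex_RInt (bform_integrand a1 a2 b f h) 0 Rad.
Proof. intros. apply ex_RInt_inner_continuous. lra. apply inner_continuous_bform_integrand; auto. Qed.

Lemma bform_lincomb_l Rad a1 a2 b c1 f1 c2 f2 h : 0 < Rad -> C1_0 Rad f1 -> C1_0 Rad f2 -> C1_0 Rad h ->
  bform Rad a1 a2 b (lincomb c1 f1 c2 f2) h = c1 * bform Rad a1 a2 b f1 h + c2 * bform Rad a1 a2 b f2 h.
Proof.
  intros HR H1 H2 Hh. unfold bform. rewrite <- RInt_lincomb by (apply ex_RInt_bform_integrand; auto).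
  apply RInt_ext. intros x Hx. rewrite Rmin_left in Hx by lra. rewrite Rmax_right in Hx by lra.
  unfold bform_integrand. rewrite (Derive_lincomb Rad) by auto. unfold lincomb. Rring.
Qed.

Lemma bform_sym Rad a1 a2 b f h : bform Rad a1 a2 b f h = bform Rad a1 a2 b h f.
Proof. unfold bform. apply RInt_ext. intros x _. unfold bform_integrand. Rring. Qed.

Lemma bform_lincomb_r Rad a1 a2 b c1 f1 c2 f2 h : 0 < Rad -> C1_0 Rad f1 -> C1_0 Rad f2 -> C1_0 Rad h ->
  bform Rad a1 a2 b h (lincomb c1 f1 c2 f2) = c1 * bform Rad a1 a2 b h f1 + c2 * bform Rad a1 a2 b h f2.
Proof.
  intros. rewrite bform_sym, (bform_sym Rad a1 a2 b h f1), (bform_sym Rad a1 a2 b h f2).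
  apply bform_lincomb_l; auto.
Qed.

Lemma bform_decomp Rad a1 a2 b f h : 0 < Rad -> C1_0 Rad f -> C1_0 Rad h ->
  bform Rad a1 a2 b f h = a1 * bform Rad 1 0 0 f h + a2 * bform Rad 0 1 0 f h + b * bform Rad 0 0 1 f h.
Proof.
  intros HR Hf Hh. unfold bform.
  rewrite <- (RInt_lincomb (bform_integrand 1 0 0 f h) (bform_integrand 0 1 0 f h) a1 a2) by (apply ex_RInt_bform_integrand; auto).
  rewrite <- (Rmult_1_l (RInt (fun r => a1 * bform_integrand 1 0 0 f h r + a2 * bform_integrand 0 1 0 f h r) 0 Rad)).
  rewrite <- RInt_lincomb. 2: apply ex_RInt_lincomb; apply ex_RInt_bform_integrand; auto. 2: apply ex_RInt_bform_integrand; auto.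
  apply RInt_ext. intros x _. unfold bform_integrand. Rring.
Qed.

Lemma bform_nonneg Rad a1 a2 b f : 0 < Rad -> C1_0 Rad f -> 0 <= a1 -> 0 <= a2 -> 0 <= b ->
  0 <= bform Rad a1 a2 b f f.
Proof.
  intros HR Hf H1 H2 H3. apply RInt_ge_0. lra. apply ex_RInt_bform_integrand; auto.
  intros x Hx. unfold bform_integrand.
  assert (0 <= x * Derive f x * Derive f x) by (rewrite Rmult_assoc; apply Rmult_le_pos; [lra| apply Rle_0_sqr]).
  assert (0 <= f x * f x / x) by (apply Rdiv_le_0_compat; [apply Rle_0_sqr|lra]).
  assert (0 <= x * f x * f x) by (rewrite Rmult_assoc; apply Rmult_le_pos; [lra| apply Rle_0_sqr]).
  assert (0 <= a1 * (x * Derive f x * Derive f x)) by (apply Rmult_le_pos; auto).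
  assert (0 <= a2 * (f x * f x / x)) by (apply Rmult_le_pos; auto).
  assert (0 <= b * (x * f x * f x)) by (apply Rmult_le_pos; auto). lra.
Qed.

Lemma bform_lincomb_sq Rad a1 a2 b f h t : 0 < Rad -> C1_0 Rad f -> C1_0 Rad h ->
  bform Rad a1 a2 b (lincomb 1 f t h) (lincomb 1 f t h) =
  bform Rad a1 a2 b f f + 2 * t * bform Rad a1 a2 b f h + t * t * bform Rad a1 a2 b h h.
Proof.
  intros HR Hf Hh. rewrite bform_lincomb_l; auto; [|apply C1_0_lincomb; auto].
  rewrite !bform_lincomb_r; auto. rewrite (bform_sym Rad a1 a2 b h f). ring.
Qed.

Lemma bform_cauchy_schwarz Rad a1 a2 b f h : 0 < Rad -> C1_0 Rad f -> C1_0 Rad h -> 0 <= a1 -> 0 <= a2 -> 0 <= b ->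
  bform Rad a1 a2 b f h * bform Rad a1 a2 b f h <= bform Rad a1 a2 b f f * bform Rad a1 a2 b h h.
Proof.
  intros. apply discriminant_le. apply bform_nonneg; auto.
  intros t. rewrite <- bform_lincomb_sq; auto. apply bform_nonneg; auto. apply C1_0_lincomb; auto.
Qed.

Lemma bform_cauchy_schwarz_abs Rad a1 a2 b f h : 0 < Rad -> C1_0 Rad f -> C1_0 Rad h -> 0 <= a1 -> 0 <= a2 -> 0 <= b ->
  Rabs (bform Rad a1 a2 b f h) <= sqrt (bform Rad a1 a2 b f f) * sqrt (bform Rad a1 a2 b h h).
Proof.
  intros. rewrite <- sqrt_mult by (apply bform_nonneg; auto).
  rewrite <- sqrt_Rsqr_abs. apply sqrt_le_1_alt. unfold Rsqr. apply bform_cauchy_schwarz; auto.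
Qed.

Lemma Hnorm2_bform Rad f : Hnorm2 Rad f = bform Rad 1 1 0 f f.
Proof. unfold Hnorm2, bform. apply RInt_ext. intros. unfold bform_integrand. Rring. Qed.

Lemma Hnorm2_nonneg Rad f : 0 < Rad -> C1_0 Rad f -> 0 <= Hnorm2 Rad f.
Proof. intros; rewrite Hnorm2_bform; apply bform_nonneg; auto; lra. Qed.

Lemma le_of_sub_sq_le (g : R -> R) A B x : 0 < x -> continuous g 0 -> g 0 = 0 ->
  (forall e, 0 < e < x -> A - g e * g e <= B) -> A <= B.
Proof.
  intros Hx Cg g0 Hle.
  destruct (Rle_or_lt A B) as [HAB|HBA]; auto. exfalso.
  set (d := A - B).
  destruct (eps_delta_of_continuous g 0 Cg (Rmin 1 d) ltac:(apply Rmin_pos; unfold d; lra)) as [de [Hde Hy]].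
  set (e := Rmin (de / 2) (x / 2)).
  assert (He : 0 < e < x) by (unfold e; split; [apply Rmin_pos; lra| pose proof (Rmin_r (de/2) (x/2)); lra]).
  specialize (Hle e He). specialize (Hy e).
  rewrite g0, !Rminus_0_r in Hy.
  assert (Hb : Rabs e < de) by (rewrite Rabs_right by lra; pose proof (Rmin_l (de/2) (x/2)); unfold e in *; lra).
  specialize (Hy Hb).
  assert (Rabs (g e) < 1) by (pose proof (Rmin_l 1 d); lra).
  assert (Rabs (g e) < d) by (pose proof (Rmin_r 1 d); lra).
  assert (g e * g e <= Rabs (g e)).
  { pose proof (Rsqr_abs (g e)). unfold Rsqr in *. pose proof (Rabs_pos (g e)). nra. }
  unfold d in *. lra.
Qed.

Lemma two_mul_le_weighted_sq r a g : 0 < r -> 2 * a * g <= r * g * g + a * a / r.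
Proof.
  intros Hr.
  assert (E : r * g * g + a * a / r - 2 * a * g = (r * g - a) * (r * g - a) / r) by (field; lra).
  assert (0 <= (r * g - a) * (r * g - a) / r) by (apply Rdiv_le_0_compat; [apply Rle_0_sqr | lra]).
  lra.
Qed.

Section C1_ext_Hnorm2.

Variables (Rad M : R) (f fh gh : R -> R).
Hypotheses (HR : 0 < Rad) (Hf : C1_0 Rad f) (Hext : C1_ext Rad f fh gh M).

Let G := fun r => r * gh r * gh r + fh r * fh r / r.

Lemma C1_ext_Hnorm2_integrand_continuous : continuous_all G.
Proof.
  destruct Hext as [Cf Cg _ _ HM Bnd _ _].
  apply continuous_all_plus. apply continuous_all_mult. apply continuous_all_mult.
  apply continuous_all_id. auto. auto. apply continuous_all_mul_div with M M; auto.
Qed.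

Lemma C1_ext_Hnorm2_RInt : Hnorm2 Rad f = RInt G 0 Rad.
Proof.
  rewrite Hnorm2_bform; unfold bform. apply RInt_ext. intros r Hr.
  rewrite Rmin_left in Hr by lra. rewrite Rmax_right in Hr by lra.
  unfold bform_integrand, G. destruct (ext_derive _ _ _ _ _ Hext r Hr) as [_ ->].
  rewrite (ext_eq _ _ _ _ _ Hext) by lra. Rring.
Qed.

Lemma C1_ext_is_RInt_sq e x : 0 < e < x -> x < Rad ->
  is_RInt (fun r => 2 * fh r * gh r) e x (fh x * fh x - fh e * fh e).
Proof.
  intros He Hx. destruct Hext as [Cf Cg Eq Der _ _ _ _].
  apply (is_RInt_derive (fun r => fh r * fh r) (fun r => 2 * fh r * gh r)).
  - intros y Hy. rewrite Rmin_left in Hy by lra. rewrite Rmax_right in Hy by lra.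
    assert (Hd : is_derive fh y (gh y)).
    { destruct (Der y) as [Ed Dd]. lra. apply is_derive_ext_loc with f.
      apply locally_open_interval with 0 Rad. lra. intros; apply Eq; lra.
      rewrite <- Dd. apply Derive_correct; auto. }
    replace (2 * fh y * gh y) with (plus (mult (gh y) (fh y)) (mult (fh y) (gh y))).
    apply (is_derive_mult fh fh y (gh y) (gh y) Hd Hd). intros; apply Rmult_comm.
    unfold plus, mult; simpl. ring.
  - intros y _. apply (continuous_mult (fun r => 2 * fh r) gh).
    apply (continuous_mult (fun _ => 2) fh). apply continuous_const. apply Cf. apply Cg.
Qed.

(* The AM-GM inequality [2 f f' <= r f'^2 + f^2 / r] bounds [f(x)^2 - f(e)^2 = int_e^x 2 f f']. *)
Lemma C1_ext_sq_sub_sq_le_Hnorm2 e x : 0 < e < x -> x < Rad ->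
  fh x * fh x - fh e * fh e <= Hnorm2 Rad f.
Proof.
  intros He Hx.
  assert (CG := C1_ext_Hnorm2_integrand_continuous).
  assert (exG : forall a b, ex_RInt G a b).
  { intros. apply (@ex_RInt_continuous R_CompleteNormedModule). intros; apply CG. }
  assert (G0 : forall r, 0 <= r -> 0 <= G r).
  { intros r [Hr|<-]; unfold G.
    - pose proof (two_mul_le_weighted_sq r (fh r) (gh r) Hr).
      pose proof (two_mul_le_weighted_sq r (fh r) (- gh r) Hr). lra.
    - unfold Rdiv; rewrite Rinv_0. lra. }
  pose proof (C1_ext_is_RInt_sq e x He Hx) as HI.
  rewrite <- (@is_RInt_unique R_CompleteNormedModule _ _ _ _ HI).
  apply Rle_trans with (RInt G e x).
  { apply RInt_le. lra. eexists; exact HI. apply exG.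
    intros r Hr. apply two_mul_le_weighted_sq; lra. }
  rewrite C1_ext_Hnorm2_RInt, <- (RInt_Chasles G 0 e Rad), <- (RInt_Chasles G e x Rad) by auto.
  assert (0 <= RInt G 0 e) by (apply RInt_ge_0; try lra; auto; intros; apply G0; lra).
  assert (0 <= RInt G x Rad) by (apply RInt_ge_0; try lra; auto; intros; apply G0; lra).
  change (plus (RInt G 0 e) (plus (RInt G e x) (RInt G x Rad))) with (RInt G 0 e + (RInt G e x + RInt G x Rad)).
  lra.
Qed.

End C1_ext_Hnorm2.

Lemma sq_le_Hnorm2 Rad f x : 0 < Rad -> C1_0 Rad f -> 0 <= x <= Rad -> f x * f x <= Hnorm2 Rad f.
Proof.
  intros HR Hf Hx. pose proof (Hnorm2_nonneg Rad f HR Hf) as HN0.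
  destruct (C1_0_C1_ext Rad f HR Hf) as [fh [gh [M Hext]]].
  rewrite (ext_eq _ _ _ _ _ Hext) by lra.
  destruct (Req_dec x 0) as [->|Hx0].
  { rewrite (ext_left _ _ _ _ _ Hext) by lra. lra. }
  destruct (Req_dec x Rad) as [->|HxR].
  { rewrite (ext_right _ _ _ _ _ Hext) by lra. lra. }
  apply (le_of_sub_sq_le fh _ _ x). lra.
  apply (ext_f_continuous _ _ _ _ _ Hext). apply (ext_left _ _ _ _ _ Hext); lra.
  intros e He. apply (C1_ext_sq_sub_sq_le_Hnorm2 Rad M f fh gh); auto; lra.
Qed.

Lemma abs_le_sqrt_Hnorm2 Rad f x : 0 < Rad -> C1_0 Rad f -> 0 <= x <= Rad -> Rabs (f x) <= sqrt (Hnorm2 Rad f).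
Proof.
  intros. rewrite <- sqrt_Rsqr_abs. apply sqrt_le_1_alt. unfold Rsqr. apply sq_le_Hnorm2; auto.
Qed.

Lemma Hnorm2_add_le Rad f g : 0 < Rad -> C1_0 Rad f -> C1_0 Rad g -> Hnorm2 Rad (lincomb 1 f 1 g) <= 2 * Hnorm2 Rad f + 2 * Hnorm2 Rad g.
Proof.
  intros. rewrite !Hnorm2_bform. rewrite bform_lincomb_sq; auto.
  pose proof (bform_nonneg Rad 1 1 0 (lincomb 1 f (-1) g) H ltac:(apply C1_0_lincomb; auto) ltac:(lra) ltac:(lra) ltac:(lra)).
  rewrite bform_lincomb_sq in H2; auto. lra.
Qed.

Lemma Hnorm2_sub Rad f g : 0 < Rad -> C1_0 Rad f -> C1_0 Rad g ->
  Hnorm2 Rad f - Hnorm2 Rad g = bform Rad 1 1 0 (lincomb 1 f (-1) g) (lincomb 1 f 1 g).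
Proof.
  intros. rewrite !Hnorm2_bform. rewrite bform_lincomb_l; auto. rewrite !bform_lincomb_r; auto.
  rewrite (bform_sym Rad 1 1 0 g f). ring. apply C1_0_lincomb; auto.
Qed.

Lemma Hnorm2_scal Rad c f : 0 < Rad -> C1_0 Rad f -> Hnorm2 Rad (lincomb c f 0 f) = c * c * Hnorm2 Rad f.
Proof.
  intros. rewrite !Hnorm2_bform. rewrite bform_lincomb_l; auto. rewrite !bform_lincomb_r; auto. ring. apply C1_0_lincomb; auto.
Qed.

Definition bform_const Rad a1 a2 b := Rabs a1 + Rabs (a2 - a1) + Rabs b * Rad * Rad.

Lemma bform_bound Rad a1 a2 b f h : 0 < Rad -> C1_0 Rad f -> C1_0 Rad h ->
  Rabs (bform Rad a1 a2 b f h) <= bform_const Rad a1 a2 b * sqrt (Hnorm2 Rad f) * sqrt (Hnorm2 Rad h).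
Proof.
  intros HR Hf Hh.
  assert (E : bform Rad a1 a2 b f h = a1 * bform Rad 1 1 0 f h + (a2 - a1) * bform Rad 0 1 0 f h + b * bform Rad 0 0 1 f h).
  { rewrite (bform_decomp Rad a1 a2 b), (bform_decomp Rad 1 1 0), (bform_decomp Rad 0 1 0), (bform_decomp Rad 0 0 1); auto. ring. }
  assert (P : forall g, C1_0 Rad g -> bform Rad 0 1 0 g g <= Hnorm2 Rad g).
  { intros g Hg. rewrite !Hnorm2_bform. rewrite (bform_decomp Rad 1 1 0), (bform_decomp Rad 0 1 0); auto.
    pose proof (bform_nonneg Rad 1 0 0 g HR Hg). rewrite (bform_decomp Rad 1 0 0) in H; auto. lra. }
  set (sf := sqrt (Hnorm2 Rad f)). set (sh := sqrt (Hnorm2 Rad h)).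
  assert (0 <= sf) by apply sqrt_pos. assert (0 <= sh) by apply sqrt_pos.
  assert (B1 : Rabs (bform Rad 1 1 0 f h) <= sf * sh) by (unfold sf, sh; rewrite !Hnorm2_bform; apply bform_cauchy_schwarz_abs; auto; lra).
  assert (B2 : Rabs (bform Rad 0 1 0 f h) <= sf * sh).
  { eapply Rle_trans. apply bform_cauchy_schwarz_abs; auto; lra.
    apply Rmult_le_compat; try apply sqrt_pos; apply sqrt_le_1_alt; apply P; auto. }
  assert (B3 : Rabs (bform Rad 0 0 1 f h) <= Rad * Rad * (sf * sh)).
  { unfold bform. replace (Rad * Rad * (sf * sh)) with ((Rad * sf * sh) * Rad) by ring.
    apply RInt_abs_le. lra. apply ex_RInt_bform_integrand; auto.
    intros r Hr. unfold bform_integrand. rewrite !Rmult_0_l, !Rplus_0_l, Rmult_1_l.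
    rewrite !Rabs_mult. rewrite (Rabs_right r) by lra.
    pose proof (abs_le_sqrt_Hnorm2 Rad f r HR Hf ltac:(lra)). pose proof (abs_le_sqrt_Hnorm2 Rad h r HR Hh ltac:(lra)).
    pose proof (Rabs_pos (f r)). pose proof (Rabs_pos (h r)).
    fold sf sh in H1, H2. apply Rmult_le_compat; try nra. }
  rewrite E. unfold bform_const. fold sf sh.
  eapply Rle_trans. apply Rabs_triang. eapply Rle_trans. apply Rplus_le_compat_r. apply Rabs_triang.
  rewrite !Rabs_mult.
  pose proof (Rabs_pos a1). pose proof (Rabs_pos (a2 - a1)). pose proof (Rabs_pos b).
  assert (0 <= sf * sh) by nra.
  assert (Rabs a1 * Rabs (bform Rad 1 1 0 f h) <= Rabs a1 * (sf * sh)) by (apply Rmult_le_compat_l; auto).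
  assert (Rabs (a2 - a1) * Rabs (bform Rad 0 1 0 f h) <= Rabs (a2 - a1) * (sf * sh)) by (apply Rmult_le_compat_l; auto).
  assert (Rabs b * Rabs (bform Rad 0 0 1 f h) <= Rabs b * (Rad * Rad * (sf * sh))) by (apply Rmult_le_compat_l; auto).
  nra.
Qed.

Lemma bform_const_nonneg Rad a1 a2 b : 0 < Rad -> 0 <= bform_const Rad a1 a2 b.
Proof. intros. unfold bform_const. pose proof (Rabs_pos a1); pose proof (Rabs_pos (a2 - a1)); pose proof (Rabs_pos b).
  assert (0 <= Rabs b * Rad * Rad) by (apply Rmult_le_pos; [apply Rmult_le_pos|]; lra). lra. Qed.

(** * Functionals with a Lipschitz nonlinearity *)

Record deriv_lipschitz (phi dphi : R -> R) (K : R) : Prop := {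
  dlip_derive : forall s, is_derive phi s (dphi s);
  dlip_zero : dphi 0 = 0;
  dlip_lipschitz : forall a b, Rabs (dphi a - dphi b) <= K * Rabs (a - b);
  dlip_K_nonneg : 0 <= K }.

Lemma dlip_continuous phi dphi K : deriv_lipschitz phi dphi K -> continuous_all phi.
Proof. intros H x. apply (@ex_derive_continuous R_AbsRing R_NormedModule). eexists; apply (dlip_derive _ _ _ H). Qed.

Lemma dlip_deriv_continuous phi dphi K : deriv_lipschitz phi dphi K -> continuous_all dphi.
Proof.
  intros H x. apply continuous_of_eps_delta. intros eps Heps. pose proof (dlip_K_nonneg _ _ _ H).
  exists (eps / (K + 1)). split. apply Rdiv_lt_0_compat; lra.
  intros y Hy. eapply Rle_lt_trans. apply (dlip_lipschitz _ _ _ H).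
  apply Rle_lt_trans with (K * (eps / (K+1))). apply Rmult_le_compat_l; lra.
  apply Rlt_le_trans with ((K+1) * (eps / (K+1))).
  assert (0 < eps / (K+1)) by (apply Rdiv_lt_0_compat; lra). nra. right; field; lra.
Qed.

Lemma dlip_deriv_bound phi dphi K a : deriv_lipschitz phi dphi K -> Rabs (dphi a) <= K * Rabs a.
Proof. intros H. pose proof (dlip_lipschitz _ _ _ H a 0). rewrite (dlip_zero _ _ _ H), !Rminus_0_r in H0. auto. Qed.

Lemma dlip_taylor phi dphi K a h : deriv_lipschitz phi dphi K -> Rabs (phi (a + h) - phi a - dphi a * h) <= K * (h * h).
Proof.
  intros H. destruct (MVT_gen phi a (a + h) dphi) as [c [Hc Ec]].
  - intros; apply (dlip_derive _ _ _ H).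
  - intros; apply continuity_pt_filterlim. eapply dlip_continuous; eauto.
  - replace (a + h - a) with h in Ec by ring. rewrite Ec.
    replace (dphi c * h - dphi a * h) with ((dphi c - dphi a) * h) by ring.
    rewrite Rabs_mult. pose proof (dlip_lipschitz _ _ _ H c a). pose proof (dlip_K_nonneg _ _ _ H).
    assert (Rabs (c - a) <= Rabs h).
    { unfold Rmin, Rmax in Hc. destruct Rle_dec; unfold Rabs; repeat destruct Rcase_abs; lra. }
    pose proof (Rabs_pos h). pose proof (Rabs_pos (dphi c - dphi a)).
    apply Rle_trans with (K * Rabs h * Rabs h). apply Rmult_le_compat_r; auto. nra.
    rewrite Rmult_assoc, <- Rabs_mult, Rabs_right. lra. apply Rle_ge, Rle_0_sqr.
Qed.

Definition nl_energy Rad (phi f : R -> R) : R := RInt (fun r => r * phi (f r)) 0 Rad.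
Definition nl_deriv Rad (dphi f h : R -> R) : R := RInt (fun r => r * dphi (f r) * h r) 0 Rad.

Lemma ex_RInt_nl_energy Rad phi f : 0 < Rad -> continuous_all phi -> C1_0 Rad f -> ex_RInt (fun r => r * phi (f r)) 0 Rad.
Proof.
  intros HR Hp Hf. destruct (C1_0_C1_ext Rad f HR Hf) as [fh [gh [M Hr]]]. apply ex_RInt_inner_continuous. lra.
  apply inner_continuous_mult. apply inner_continuous_id. apply inner_continuous_comp; auto. eapply C1_ext_inner_continuous; eauto.
Qed.

Lemma ex_RInt_nl_deriv Rad dphi f h : 0 < Rad -> continuous_all dphi -> C1_0 Rad f -> C1_0 Rad h -> ex_RInt (fun r => r * dphi (f r) * h r) 0 Rad.
Proof.
  intros HR Hp Hf Hh. destruct (C1_0_C1_ext Rad f HR Hf) as [fh [gh [M Hr]]].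
  destruct (C1_0_C1_ext Rad h HR Hh) as [hh [kh [N Hr2]]]. apply ex_RInt_inner_continuous. lra.
  apply inner_continuous_mult. apply inner_continuous_mult. apply inner_continuous_id. apply inner_continuous_comp; auto. eapply C1_ext_inner_continuous; eauto. eapply C1_ext_inner_continuous; eauto.
Qed.

Definition energy Rad a1 a2 b phi f : R := 1/2 * bform Rad a1 a2 b f f + nl_energy Rad phi f.
Definition energy_deriv Rad a1 a2 b dphi f h : R := bform Rad a1 a2 b f h + nl_deriv Rad dphi f h.

Definition deriv_const Rad a1 a2 b K := bform_const Rad a1 a2 b + K * Rad * Rad.

Lemma energy_deriv_bound Rad a1 a2 b phi dphi K f h : 0 < Rad -> deriv_lipschitz phi dphi K -> C1_0 Rad f -> C1_0 Rad h ->
  Rabs (energy_deriv Rad a1 a2 b dphi f h) <= deriv_const Rad a1 a2 b K * sqrt (Hnorm2 Rad f) * sqrt (Hnorm2 Rad h).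
Proof.
  intros HR Hp Hf Hh. unfold energy_deriv, deriv_const.
  set (sf := sqrt (Hnorm2 Rad f)). set (sh := sqrt (Hnorm2 Rad h)).
  assert (0 <= sf) by apply sqrt_pos. assert (0 <= sh) by apply sqrt_pos. pose proof (dlip_K_nonneg _ _ _ Hp).
  pose proof (bform_bound Rad a1 a2 b f h HR Hf Hh). fold sf sh in H2.
  assert (Rabs (nl_deriv Rad dphi f h) <= K * Rad * Rad * sf * sh).
  { unfold nl_deriv. replace (K * Rad * Rad * sf * sh) with ((K * Rad * sf * sh) * Rad) by ring.
    apply RInt_abs_le. lra. apply ex_RInt_nl_deriv; auto. eapply dlip_deriv_continuous; eauto.
    intros r Hr. rewrite !Rabs_mult, (Rabs_right r) by lra.
    pose proof (abs_le_sqrt_Hnorm2 Rad f r HR Hf ltac:(lra)). pose proof (abs_le_sqrt_Hnorm2 Rad h r HR Hh ltac:(lra)). fold sf sh in H3, H4.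
    pose proof (dlip_deriv_bound _ _ _ (f r) Hp).
    pose proof (Rabs_pos (f r)). pose proof (Rabs_pos (h r)). pose proof (Rabs_pos (dphi (f r))).
    assert (Rabs (dphi (f r)) <= K * sf) by (eapply Rle_trans; [exact H5|]; apply Rmult_le_compat_l; auto).
    apply Rle_trans with (Rad * (K * sf) * sh).
    apply Rmult_le_compat; try nra. right; ring. }
  eapply Rle_trans. apply Rabs_triang. nra.
Qed.

Lemma deriv_const_nonneg Rad a1 a2 b K : 0 < Rad -> 0 <= K -> 0 <= deriv_const Rad a1 a2 b K.
Proof. intros. unfold deriv_const. pose proof (bform_const_nonneg Rad a1 a2 b H). assert (0 <= K * Rad * Rad) by (apply Rmult_le_pos; [apply Rmult_le_pos|]; lra). lra. Qed.

Lemma nl_deriv_sub Rad dphi f g h : 0 < Rad -> continuous_all dphi -> C1_0 Rad f -> C1_0 Rad g -> C1_0 Rad h ->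
  nl_deriv Rad dphi f h - nl_deriv Rad dphi g h = RInt (fun r => r * (dphi (f r) - dphi (g r)) * h r) 0 Rad.
Proof.
  intros. unfold nl_deriv. rewrite <- (Rmult_1_l (RInt (fun r => r * dphi (f r) * h r) 0 Rad)).
  replace (1 * RInt (fun r => r * dphi (f r) * h r) 0 Rad - RInt (fun r => r * dphi (g r) * h r) 0 Rad)
    with (1 * RInt (fun r => r * dphi (f r) * h r) 0 Rad + (-1) * RInt (fun r => r * dphi (g r) * h r) 0 Rad) by ring.
  rewrite <- RInt_lincomb by (apply ex_RInt_nl_deriv; auto). apply RInt_ext. intros; Rring.
Qed.

Lemma energy_deriv_lipschitz Rad a1 a2 b phi dphi K f g h : 0 < Rad -> deriv_lipschitz phi dphi K -> C1_0 Rad f -> C1_0 Rad g -> C1_0 Rad h ->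
  Rabs (energy_deriv Rad a1 a2 b dphi f h - energy_deriv Rad a1 a2 b dphi g h) <= deriv_const Rad a1 a2 b K * sqrt (Hnorm2 Rad (lincomb 1 f (-1) g)) * sqrt (Hnorm2 Rad h).
Proof.
  intros HR Hp Hf Hg Hh. unfold energy_deriv, deriv_const.
  assert (Hd : C1_0 Rad (lincomb 1 f (-1) g)) by (apply C1_0_lincomb; auto).
  set (sf := sqrt (Hnorm2 Rad (lincomb 1 f (-1) g))). set (sh := sqrt (Hnorm2 Rad h)).
  assert (0 <= sf) by apply sqrt_pos. assert (0 <= sh) by apply sqrt_pos. pose proof (dlip_K_nonneg _ _ _ Hp).
  assert (ED : bform Rad a1 a2 b f h - bform Rad a1 a2 b g h = bform Rad a1 a2 b (lincomb 1 f (-1) g) h).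
  { rewrite bform_lincomb_l; auto. ring. }
  pose proof (bform_bound Rad a1 a2 b _ h HR Hd Hh). fold sf sh in H2.
  assert (Rabs (nl_deriv Rad dphi f h - nl_deriv Rad dphi g h) <= K * Rad * Rad * sf * sh).
  { rewrite nl_deriv_sub; auto. 2: eapply dlip_deriv_continuous; eauto.
    replace (K * Rad * Rad * sf * sh) with ((K * Rad * sf * sh) * Rad) by ring.
    apply RInt_abs_le. lra.
    { destruct (C1_0_C1_ext Rad f HR Hf) as [fh [gh [M Hr]]]. destruct (C1_0_C1_ext Rad g HR Hg) as [fh' [gh' [M' Hr']]].
      destruct (C1_0_C1_ext Rad h HR Hh) as [hh [kh [N Hr2]]]. apply ex_RInt_inner_continuous. lra.
      pose proof (dlip_deriv_continuous _ _ _ Hp).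
      apply inner_continuous_mult. apply inner_continuous_mult. apply inner_continuous_id. apply inner_continuous_minus. apply inner_continuous_comp; auto. eapply C1_ext_inner_continuous; eauto.
      apply inner_continuous_comp; auto. eapply C1_ext_inner_continuous; eauto. eapply C1_ext_inner_continuous; eauto. }
    intros r Hr. rewrite !Rabs_mult, (Rabs_right r) by lra.
    pose proof (abs_le_sqrt_Hnorm2 Rad _ r HR Hd ltac:(lra)). pose proof (abs_le_sqrt_Hnorm2 Rad h r HR Hh ltac:(lra)). fold sf sh in H3, H4.
    unfold lincomb in H3. replace (1 * f r + -1 * g r) with (f r - g r) in H3 by ring.
    pose proof (dlip_lipschitz _ _ _ Hp (f r) (g r)).
    pose proof (Rabs_pos (f r - g r)). pose proof (Rabs_pos (h r)). pose proof (Rabs_pos (dphi (f r) - dphi (g r))).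
    assert (Rabs (dphi (f r) - dphi (g r)) <= K * sf) by (eapply Rle_trans; [exact H5|]; apply Rmult_le_compat_l; auto).
    apply Rle_trans with (Rad * (K * sf) * sh).
    apply Rmult_le_compat; try nra. right; ring. }
  replace (bform Rad a1 a2 b f h + nl_deriv Rad dphi f h - (bform Rad a1 a2 b g h + nl_deriv Rad dphi g h))
    with ((bform Rad a1 a2 b f h - bform Rad a1 a2 b g h) + (nl_deriv Rad dphi f h - nl_deriv Rad dphi g h)) by ring.
  rewrite ED. eapply Rle_trans. apply Rabs_triang. nra.
Qed.

Definition taylor_const Rad a1 a2 b K := bform_const Rad a1 a2 b / 2 + K * Rad * Rad.

Lemma nl_energy_taylor Rad phi dphi K f h : 0 < Rad -> deriv_lipschitz phi dphi K -> C1_0 Rad f -> C1_0 Rad h ->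
  Rabs (nl_energy Rad phi (lincomb 1 f 1 h) - nl_energy Rad phi f - nl_deriv Rad dphi f h) <= K * Rad * Rad * Hnorm2 Rad h.
Proof.
  intros HR Hp Hf Hh.
  pose proof (dlip_continuous _ _ _ Hp) as Cp. pose proof (dlip_deriv_continuous _ _ _ Hp) as Cd.
  pose proof (dlip_K_nonneg _ _ _ Hp).
  set (T := fun r => r * (phi (f r + h r) - phi (f r) - dphi (f r) * h r)).
  assert (X1 := ex_RInt_nl_energy Rad phi (lincomb 1 f 1 h) HR Cp (C1_0_lincomb Rad 1 f 1 h HR Hf Hh)).
  assert (X2 := ex_RInt_nl_energy Rad phi f HR Cp Hf). assert (X3 := ex_RInt_nl_deriv Rad dphi f h HR Cd Hf Hh).
  assert (ET : nl_energy Rad phi (lincomb 1 f 1 h) - nl_energy Rad phi f - nl_deriv Rad dphi f h = RInt T 0 Rad).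
  { unfold nl_energy, nl_deriv.
    replace (RInt (fun r => r * phi (lincomb 1 f 1 h r)) 0 Rad - RInt (fun r => r * phi (f r)) 0 Rad -
      RInt (fun r => r * dphi (f r) * h r) 0 Rad) with
      (1 * (1 * RInt (fun r => r * phi (lincomb 1 f 1 h r)) 0 Rad + (-1) * RInt (fun r => r * phi (f r)) 0 Rad) +
       (-1) * RInt (fun r => r * dphi (f r) * h r) 0 Rad) by ring.
    rewrite <- (RInt_lincomb _ _ 1 (-1) 0 Rad X1 X2).
    rewrite <- (RInt_lincomb _ _ 1 (-1) 0 Rad (ex_RInt_lincomb _ _ 1 (-1) 0 Rad X1 X2) X3).
    apply RInt_ext. intros. unfold T, lincomb. rewrite !Rmult_1_l. Rring. }
  rewrite ET. replace (K * Rad * Rad * Hnorm2 Rad h) with ((Rad * K * Hnorm2 Rad h) * Rad) by ring.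
  apply RInt_abs_le. lra.
  { apply ex_RInt_ext with (fun r => 1 * (1 * (r * phi (lincomb 1 f 1 h r)) + (-1) * (r * phi (f r))) + (-1) * (r * dphi (f r) * h r)).
    - intros r _. unfold T, lincomb. rewrite !Rmult_1_l. Rring.
    - apply ex_RInt_lincomb; [apply ex_RInt_lincomb|]; auto. }
  intros r Hr. unfold T. rewrite Rabs_mult, (Rabs_right r) by lra.
  pose proof (dlip_taylor _ _ _ (f r) (h r) Hp). pose proof (sq_le_Hnorm2 Rad h r HR Hh ltac:(lra)).
  pose proof (Rabs_pos (phi (f r + h r) - phi (f r) - dphi (f r) * h r)).
  apply Rle_trans with (Rad * (K * Hnorm2 Rad h)); [|right; ring].
  apply Rmult_le_compat; try lra.
  eapply Rle_trans; [eassumption|]. apply Rmult_le_compat_l; auto.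
Qed.

Lemma taylor_const_nonneg Rad a1 a2 b K : 0 < Rad -> 0 <= K -> 0 <= taylor_const Rad a1 a2 b K.
Proof. intros. unfold taylor_const. pose proof (bform_const_nonneg Rad a1 a2 b H). assert (0 <= K * Rad * Rad) by (apply Rmult_le_pos; [apply Rmult_le_pos|]; lra). lra. Qed.

Lemma energy_taylor Rad a1 a2 b phi dphi K f h : 0 < Rad -> deriv_lipschitz phi dphi K -> C1_0 Rad f -> C1_0 Rad h ->
  Rabs (energy Rad a1 a2 b phi (lincomb 1 f 1 h) - energy Rad a1 a2 b phi f - energy_deriv Rad a1 a2 b dphi f h) <= taylor_const Rad a1 a2 b K * Hnorm2 Rad h.
Proof.
  intros HR Hp Hf Hh. unfold energy, energy_deriv, taylor_const.
  rewrite bform_lincomb_sq by auto.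
  pose proof (bform_bound Rad a1 a2 b h h HR Hh Hh) as Bd. rewrite Rmult_assoc, sqrt_sqrt in Bd by (apply Hnorm2_nonneg; auto).
  pose proof (nl_energy_taylor Rad phi dphi K f h HR Hp Hf Hh) as BJ.
  replace (1 / 2 * (bform Rad a1 a2 b f f + 2 * 1 * bform Rad a1 a2 b f h + 1 * 1 * bform Rad a1 a2 b h h) +
     nl_energy Rad phi (lincomb 1 f 1 h) - (1 / 2 * bform Rad a1 a2 b f f + nl_energy Rad phi f) -
     (bform Rad a1 a2 b f h + nl_deriv Rad dphi f h)) with
     (1/2 * bform Rad a1 a2 b h h + (nl_energy Rad phi (lincomb 1 f 1 h) - nl_energy Rad phi f - nl_deriv Rad dphi f h)) by field.
  eapply Rle_trans. apply Rabs_triang. rewrite Rabs_mult, (Rabs_right (1/2)) by lra.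
  unfold Rdiv in *. lra.
Qed.

Lemma energy_deriv_lincomb Rad a1 a2 b phi dphi K f c1 h1 c2 h2 : 0 < Rad -> deriv_lipschitz phi dphi K -> C1_0 Rad f -> C1_0 Rad h1 -> C1_0 Rad h2 ->
  energy_deriv Rad a1 a2 b dphi f (lincomb c1 h1 c2 h2) = c1 * energy_deriv Rad a1 a2 b dphi f h1 + c2 * energy_deriv Rad a1 a2 b dphi f h2.
Proof.
  intros HR Hp Hf H1 H2. unfold energy_deriv. rewrite bform_lincomb_r; auto.
  assert (nl_deriv Rad dphi f (lincomb c1 h1 c2 h2) = c1 * nl_deriv Rad dphi f h1 + c2 * nl_deriv Rad dphi f h2).
  { unfold nl_deriv. rewrite <- RInt_lincomb. apply RInt_ext. intros. unfold lincomb. Rring.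
    apply ex_RInt_nl_deriv; auto; eapply dlip_deriv_continuous; eauto. apply ex_RInt_nl_deriv; auto; eapply dlip_deriv_continuous; eauto. }
  rewrite H. ring.
Qed.

(** * Passage to the completion *)

Definition seqlim (u : nat -> R) : R := real (Lim_seq u).

Lemma seqlim_eq u (l : R) : is_lim_seq u l -> seqlim u = l.
Proof. intros H. unfold seqlim. rewrite (is_lim_seq_unique u l H). reflexivity. Qed.

Definition cauchy (u : nat -> R) := forall eps, 0 < eps -> exists N, forall n m, (N <= n)%nat -> (N <= m)%nat -> Rabs (u n - u m) < eps.

Lemma cauchy_is_lim_seq u : cauchy u -> is_lim_seq u (seqlim u).
Proof.
  intros H. assert (Hc : ex_lim_seq_cauchy u).
  { intros eps. destruct (H eps (cond_pos eps)) as [N HN]. exists N. auto. }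
  apply ex_lim_seq_cauchy_corr in Hc. destruct Hc as [l Hl].
  rewrite (seqlim_eq u l Hl). auto.
Qed.

Lemma sub_lincomb (f g : R -> R) : (fun r => f r - g r) = lincomb 1 f (-1) g.
Proof. apply functional_extensionality. intros; unfold lincomb; ring. Qed.
Lemma Hadd_lincomb U H k : Hadd U H k = lincomb 1 (U k) 1 (H k).
Proof. apply functional_extensionality. intros; unfold lincomb, Hadd; ring. Qed.
Lemma Hscal_lincomb c H k : Hscal c H k = lincomb c (H k) 0 (H k).
Proof. apply functional_extensionality. intros; unfold lincomb, Hscal; ring. Qed.

Definition seq_dist2 Rad (U : Hseq) k m := Hnorm2 Rad (lincomb 1 (U k) (-1) (U m)).

Lemma inH_C1 Rad U k : inH Rad U -> C1_0 Rad (U k).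
Proof. intros [H _]. auto. Qed.

Lemma inH_seq_dist2 Rad U : 0 < Rad -> inH Rad U -> forall eps, 0 < eps -> exists N, forall k m, (N <= k)%nat -> (N <= m)%nat -> seq_dist2 Rad U k m < eps.
Proof.
  intros HR [HC Hc] eps He. destruct (Hc eps He) as [N HN]. exists N. intros k m Hk Hm.
  specialize (HN k m Hk Hm). rewrite sub_lincomb in HN; auto.
Qed.

Lemma seq_dist2_nonneg Rad U k m : 0 < Rad -> inH Rad U -> 0 <= seq_dist2 Rad U k m.
Proof. intros. apply Hnorm2_nonneg; auto. apply C1_0_lincomb; auto; apply inH_C1; auto. Qed.

Lemma finite_upper_bound (u : nat -> R) N0 : exists M, forall k, (k < N0)%nat -> u k <= M.
Proof.
  induction N0. exists 0. intros; lia.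
  destruct IHN0 as [M HM]. exists (Rmax M (u N0)). intros k Hk.
  destruct (Nat.eq_dec k N0). subst. apply Rmax_r. eapply Rle_trans. apply HM. lia. apply Rmax_l.
Qed.

Lemma inH_bounded Rad U : 0 < Rad -> inH Rad U -> exists M, 0 <= M /\ forall k, Hnorm2 Rad (U k) <= M.
Proof.
  intros HR HU. destruct (inH_seq_dist2 Rad U HR HU 1 ltac:(lra)) as [N0 HN].
  destruct (finite_upper_bound (fun k => Hnorm2 Rad (U k)) N0) as [M1 HM1].
  exists (Rmax 0 (Rmax M1 (2 * 1 + 2 * Hnorm2 Rad (U N0)))). split. apply Rmax_l.
  intros k. destruct (lt_dec k N0).
  - eapply Rle_trans. apply HM1; auto. eapply Rle_trans. apply Rmax_l. apply Rmax_r.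
  - assert (E : U k = lincomb 1 (lincomb 1 (U k) (-1) (U N0)) 1 (U N0)).
    { apply functional_extensionality. intros; unfold lincomb; ring. }
    rewrite E. eapply Rle_trans. apply Hnorm2_add_le; auto. apply C1_0_lincomb; auto; apply inH_C1; auto. apply inH_C1; auto.
    eapply Rle_trans. 2: apply Rmax_r. eapply Rle_trans. 2: apply Rmax_r.
    specialize (HN k N0 ltac:(lia) ltac:(lia)). unfold seq_dist2 in HN. lra.
Qed.

Lemma sqrt_lt_of_lt_sq x y : 0 <= x -> 0 < y -> x < y * y -> sqrt x < y.
Proof. intros. rewrite <- (sqrt_square y) by lra. apply sqrt_lt_1_alt. lra. Qed.

Lemma cauchy_of_dist2_control Rad U H (u : nat -> R) : 0 < Rad -> inH Rad U -> inH Rad H ->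
  (exists C, 0 <= C /\ forall k m, Rabs (u k - u m) <= C * (sqrt (seq_dist2 Rad U k m) + seq_dist2 Rad U k m + sqrt (seq_dist2 Rad H k m) + seq_dist2 Rad H k m)) ->
  cauchy u.
Proof.
  intros HR HU HH [C [HC Hb]] eps He.
  set (t := eps / (4 * (C + 1))).
  assert (Ht : 0 < t) by (unfold t; apply Rdiv_lt_0_compat; lra).
  set (dl := Rmin 1 (t * t)).
  assert (Hdl : 0 < dl) by (unfold dl; apply Rmin_pos; nra).
  destruct (inH_seq_dist2 Rad U HR HU dl Hdl) as [N1 HN1].
  destruct (inH_seq_dist2 Rad H HR HH dl Hdl) as [N2 HN2].
  exists (max N1 N2). intros n m Hn Hm.
  assert (Hs : forall d, 0 <= d -> d < dl -> sqrt d + d <= 2 * t).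
  { intros d Hd0 Hd. unfold dl in Hd. assert (d < 1) by (pose proof (Rmin_l 1 (t*t)); lra).
    assert (d < t * t) by (pose proof (Rmin_r 1 (t*t)); lra).
    assert (sqrt d < t) by (apply sqrt_lt_of_lt_sq; auto).
    assert (d <= sqrt d).
    { rewrite <- (sqrt_square d) at 1 by lra. apply sqrt_le_1_alt. nra. }
    lra. }
  pose proof (Hs _ (seq_dist2_nonneg Rad U n m HR HU) (HN1 n m ltac:(lia) ltac:(lia))).
  pose proof (Hs _ (seq_dist2_nonneg Rad H n m HR HH) (HN2 n m ltac:(lia) ltac:(lia))).
  eapply Rle_lt_trans. apply Hb.
  apply Rle_lt_trans with (C * (4 * t)). apply Rmult_le_compat_l; lra.
  unfold t. apply Rlt_le_trans with ((C+1) * (4 * (eps / (4 * (C + 1))))).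
  assert (0 < 4 * (eps / (4 * (C + 1)))) by (apply Rmult_lt_0_compat; [lra| apply Rdiv_lt_0_compat; lra]). nra.
  right; field; lra.
Qed.

Definition Hnorm2_lim Rad U := seqlim (fun k => Hnorm2 Rad (U k)).
Definition energy_lim Rad a1 a2 b phi U := seqlim (fun k => energy Rad a1 a2 b phi (U k)).
Definition energy_deriv_lim Rad a1 a2 b dphi U H := seqlim (fun k => energy_deriv Rad a1 a2 b dphi (U k) (H k)).

Lemma Hnorm2_cvg Rad U : 0 < Rad -> inH Rad U -> is_lim_seq (fun k => Hnorm2 Rad (U k)) (Hnorm2_lim Rad U).
Proof.
  intros HR HU. apply cauchy_is_lim_seq. apply (cauchy_of_dist2_control Rad U U); auto.
  destruct (inH_bounded Rad U HR HU) as [M [HM HMb]].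
  exists (sqrt (4 * M)). split. apply sqrt_pos. intros k m.
  pose proof (inH_C1 Rad U k HU). pose proof (inH_C1 Rad U m HU).
  rewrite Hnorm2_sub; auto.
  eapply Rle_trans. apply bform_bound; auto; apply C1_0_lincomb; auto.
  replace (bform_const Rad 1 1 0) with 1 by (unfold bform_const; rewrite Rminus_eq_0, Rabs_R0, Rabs_R1; ring).
  fold (seq_dist2 Rad U k m).
  assert (sqrt (Hnorm2 Rad (lincomb 1 (U k) 1 (U m))) <= sqrt (4 * M)).
  { apply sqrt_le_1_alt. eapply Rle_trans. apply Hnorm2_add_le; auto. pose proof (HMb k); pose proof (HMb m). lra. }
  pose proof (sqrt_pos (seq_dist2 Rad U k m)). pose proof (seq_dist2_nonneg Rad U k m HR HU). pose proof (sqrt_pos (4 * M)).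
  nra.
Qed.

Lemma Hnorm2_lim_nonneg Rad U : 0 < Rad -> inH Rad U -> 0 <= Hnorm2_lim Rad U.
Proof.
  intros HR HU. pose proof (Hnorm2_cvg Rad U HR HU).
  assert (Rbar_le 0 (Hnorm2_lim Rad U)). apply (is_lim_seq_le (fun _ => 0) (fun k => Hnorm2 Rad (U k))); auto.
  intros; apply Hnorm2_nonneg; auto; apply inH_C1; auto. apply is_lim_seq_const. auto.
Qed.

Lemma Hnorm_Hnorm2_lim Rad U : 0 < Rad -> inH Rad U -> Hnorm Rad U = sqrt (Hnorm2_lim Rad U).
Proof.
  intros. unfold Hnorm, Hnorm2_lim, seqlim. reflexivity.
Qed.

Lemma energy_cvg Rad a1 a2 b phi dphi K U : 0 < Rad -> deriv_lipschitz phi dphi K -> inH Rad U ->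
  is_lim_seq (fun k => energy Rad a1 a2 b phi (U k)) (energy_lim Rad a1 a2 b phi U).
Proof.
  intros HR Hp HU. apply cauchy_is_lim_seq. apply (cauchy_of_dist2_control Rad U U); auto.
  destruct (inH_bounded Rad U HR HU) as [M [HM HMb]]. pose proof (dlip_K_nonneg _ _ _ Hp).
  pose proof (deriv_const_nonneg Rad a1 a2 b K HR H). pose proof (taylor_const_nonneg Rad a1 a2 b K HR H).
  exists (taylor_const Rad a1 a2 b K + deriv_const Rad a1 a2 b K * sqrt M). split. pose proof (sqrt_pos M). nra.
  intros k m.
  pose proof (inH_C1 Rad U k HU). pose proof (inH_C1 Rad U m HU).
  assert (Hd : C1_0 Rad (lincomb 1 (U k) (-1) (U m))) by (apply C1_0_lincomb; auto).
  assert (E : U k = lincomb 1 (U m) 1 (lincomb 1 (U k) (-1) (U m))).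
  { apply functional_extensionality. intros; unfold lincomb; ring. }
  pose proof (energy_taylor Rad a1 a2 b phi dphi K (U m) _ HR Hp H3 Hd) as B3. rewrite <- E in B3.
  pose proof (energy_deriv_bound Rad a1 a2 b phi dphi K (U m) _ HR Hp H3 Hd) as B1. fold (seq_dist2 Rad U k m) in B1, B3.
  replace (energy Rad a1 a2 b phi (U k) - energy Rad a1 a2 b phi (U m)) with
    ((energy Rad a1 a2 b phi (U k) - energy Rad a1 a2 b phi (U m) - energy_deriv Rad a1 a2 b dphi (U m) (lincomb 1 (U k) (-1) (U m))) +
      energy_deriv Rad a1 a2 b dphi (U m) (lincomb 1 (U k) (-1) (U m))) by ring.
  eapply Rle_trans. apply Rabs_triang.
  assert (sqrt (Hnorm2 Rad (U m)) <= sqrt M) by (apply sqrt_le_1_alt; auto).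
  pose proof (sqrt_pos (seq_dist2 Rad U k m)). pose proof (seq_dist2_nonneg Rad U k m HR HU). pose proof (sqrt_pos M).
  pose proof (sqrt_pos (Hnorm2 Rad (U m))).
  assert (deriv_const Rad a1 a2 b K * sqrt (Hnorm2 Rad (U m)) * sqrt (seq_dist2 Rad U k m) <= deriv_const Rad a1 a2 b K * sqrt M * sqrt (seq_dist2 Rad U k m)).
  { apply Rmult_le_compat_r; auto. apply Rmult_le_compat_l; auto. }
  set (c1' := deriv_const Rad a1 a2 b K) in *. set (c3' := taylor_const Rad a1 a2 b K) in *.
  set (s := sqrt (seq_dist2 Rad U k m)) in *. set (d := seq_dist2 Rad U k m) in *.
  assert (0 <= c3' * s) by (apply Rmult_le_pos; auto).
  assert (0 <= c1' * sqrt M * d) by (apply Rmult_le_pos; [apply Rmult_le_pos|]; auto).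
  assert (0 <= c1' * sqrt M * s) by (apply Rmult_le_pos; [apply Rmult_le_pos|]; auto).
  assert (0 <= c3' * d) by (apply Rmult_le_pos; auto).
  replace ((c3' + c1' * sqrt M) * (s + d + s + d)) with (c3' * d + c1' * sqrt M * s + (2 * (c3' * s) + c3' * d + c1' * sqrt M * s + 2 * (c1' * sqrt M * d))) by ring.
  lra.
Qed.

Lemma energy_deriv_cvg Rad a1 a2 b phi dphi K U H : 0 < Rad -> deriv_lipschitz phi dphi K -> inH Rad U -> inH Rad H ->
  is_lim_seq (fun k => energy_deriv Rad a1 a2 b dphi (U k) (H k)) (energy_deriv_lim Rad a1 a2 b dphi U H).
Proof.
  intros HR Hp HU HH. apply cauchy_is_lim_seq. apply (cauchy_of_dist2_control Rad U H); auto.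
  destruct (inH_bounded Rad U HR HU) as [M [HM HMb]]. destruct (inH_bounded Rad H HR HH) as [M' [HM' HMb']].
  pose proof (dlip_K_nonneg _ _ _ Hp). pose proof (deriv_const_nonneg Rad a1 a2 b K HR H0).
  exists (deriv_const Rad a1 a2 b K * (sqrt M + sqrt M')). split. pose proof (sqrt_pos M). pose proof (sqrt_pos M'). nra.
  intros k m.
  pose proof (inH_C1 Rad U k HU). pose proof (inH_C1 Rad U m HU).
  pose proof (inH_C1 Rad H k HH). pose proof (inH_C1 Rad H m HH).
  assert (Hd : C1_0 Rad (lincomb 1 (H k) (-1) (H m))) by (apply C1_0_lincomb; auto).
  pose proof (energy_deriv_lincomb Rad a1 a2 b phi dphi K (U k) 1 (H k) (-1) (H m) HR Hp H2 H4 H5) as EL.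
  pose proof (energy_deriv_bound Rad a1 a2 b phi dphi K (U k) _ HR Hp H2 Hd) as B1. fold (seq_dist2 Rad H k m) in B1.
  pose proof (energy_deriv_lipschitz Rad a1 a2 b phi dphi K (U k) (U m) (H m) HR Hp H2 H3 H5) as B2. fold (seq_dist2 Rad U k m) in B2.
  replace (energy_deriv Rad a1 a2 b dphi (U k) (H k) - energy_deriv Rad a1 a2 b dphi (U m) (H m)) with
    (energy_deriv Rad a1 a2 b dphi (U k) (lincomb 1 (H k) (-1) (H m)) + (energy_deriv Rad a1 a2 b dphi (U k) (H m) - energy_deriv Rad a1 a2 b dphi (U m) (H m))) by (rewrite EL; ring).
  eapply Rle_trans. apply Rabs_triang.
  assert (sqrt (Hnorm2 Rad (U k)) <= sqrt M) by (apply sqrt_le_1_alt; auto).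
  assert (sqrt (Hnorm2 Rad (H m)) <= sqrt M') by (apply sqrt_le_1_alt; auto).
  pose proof (sqrt_pos (seq_dist2 Rad U k m)). pose proof (seq_dist2_nonneg Rad U k m HR HU).
  pose proof (sqrt_pos (seq_dist2 Rad H k m)). pose proof (seq_dist2_nonneg Rad H k m HR HH).
  pose proof (sqrt_pos M). pose proof (sqrt_pos M'). pose proof (sqrt_pos (Hnorm2 Rad (U k))). pose proof (sqrt_pos (Hnorm2 Rad (H m))).
  set (c := deriv_const Rad a1 a2 b K) in *.
  assert (c * sqrt (Hnorm2 Rad (U k)) * sqrt (seq_dist2 Rad H k m) <= c * sqrt M * sqrt (seq_dist2 Rad H k m)).
  { apply Rmult_le_compat_r; auto. apply Rmult_le_compat_l; auto. }
  assert (c * sqrt (seq_dist2 Rad U k m) * sqrt (Hnorm2 Rad (H m)) <= c * sqrt (seq_dist2 Rad U k m) * sqrt M').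
  { apply Rmult_le_compat_l; auto. apply Rmult_le_pos; auto. }
  set (sU := sqrt (seq_dist2 Rad U k m)) in *. set (dU := seq_dist2 Rad U k m) in *.
  set (sH := sqrt (seq_dist2 Rad H k m)) in *. set (dH := seq_dist2 Rad H k m) in *.
  set (m1 := sqrt M) in *. set (m2 := sqrt M') in *.
  assert (0 <= c * m1 * sU) by (apply Rmult_le_pos; [apply Rmult_le_pos|]; auto).
  assert (0 <= c * m1 * dU) by (apply Rmult_le_pos; [apply Rmult_le_pos|]; auto).
  assert (0 <= c * m1 * dH) by (apply Rmult_le_pos; [apply Rmult_le_pos|]; auto).
  assert (0 <= c * m2 * sH) by (apply Rmult_le_pos; [apply Rmult_le_pos|]; auto).
  assert (0 <= c * m2 * dU) by (apply Rmult_le_pos; [apply Rmult_le_pos|]; auto).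
  assert (0 <= c * m2 * dH) by (apply Rmult_le_pos; [apply Rmult_le_pos|]; auto).
  replace (c * (m1 + m2) * (sU + dU + sH + dH)) with
    (c * m1 * sH + c * sU * m2 + (c * m1 * sU + c * m1 * dU + c * m1 * dH + c * m2 * sH + c * m2 * dU + c * m2 * dH)) by ring.
  lra.
Qed.

Lemma inH_Hadd Rad U H : 0 < Rad -> inH Rad U -> inH Rad H -> inH Rad (Hadd U H).
Proof.
  intros HR HU HH. split.
  - intros k. rewrite Hadd_lincomb. apply C1_0_lincomb; auto; apply inH_C1; auto.
  - intros eps He. destruct (inH_seq_dist2 Rad U HR HU (eps/4) ltac:(lra)) as [N1 HN1].
    destruct (inH_seq_dist2 Rad H HR HH (eps/4) ltac:(lra)) as [N2 HN2].
    exists (max N1 N2). intros k m Hk Hm.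
    assert (E : (fun r => Hadd U H k r - Hadd U H m r) = lincomb 1 (lincomb 1 (U k) (-1) (U m)) 1 (lincomb 1 (H k) (-1) (H m))).
    { apply functional_extensionality. intros; unfold lincomb, Hadd; ring. }
    pose proof (inH_C1 Rad U k HU). pose proof (inH_C1 Rad U m HU).
    pose proof (inH_C1 Rad H k HH). pose proof (inH_C1 Rad H m HH).
    rewrite E.
    eapply Rle_lt_trans. apply Hnorm2_add_le; auto; apply C1_0_lincomb; auto.
    specialize (HN1 k m ltac:(lia) ltac:(lia)). specialize (HN2 k m ltac:(lia) ltac:(lia)).
    unfold seq_dist2 in *. lra.
Qed.

Lemma inH_Hscal Rad c H : 0 < Rad -> inH Rad H -> inH Rad (Hscal c H).
Proof.
  intros HR HH. split.
  - intros k. rewrite Hscal_lincomb. apply C1_0_lincomb; auto; apply inH_C1; auto.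
  - intros eps He. destruct (inH_seq_dist2 Rad H HR HH (eps/(c*c+1))) as [N1 HN1].
    apply Rdiv_lt_0_compat; nra.
    exists N1. intros k m Hk Hm.
    assert (E : (fun r => Hscal c H k r - Hscal c H m r) = lincomb c (lincomb 1 (H k) (-1) (H m)) 0 (lincomb 1 (H k) (-1) (H m))).
    { apply functional_extensionality. intros; unfold lincomb, Hscal; ring. }
    pose proof (inH_C1 Rad H k HH). pose proof (inH_C1 Rad H m HH).
    rewrite E. rewrite Hnorm2_scal; auto. 2: apply C1_0_lincomb; auto.
    specialize (HN1 k m Hk Hm). unfold seq_dist2 in *.
    pose proof (seq_dist2_nonneg Rad H k m HR HH). unfold seq_dist2 in H2.
    apply Rle_lt_trans with (c * c * (eps / (c * c + 1))). apply Rmult_le_compat_l. nra. lra.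
    apply Rlt_le_trans with ((c*c+1) * (eps / (c*c+1))).
    assert (0 < eps / (c*c+1)) by (apply Rdiv_lt_0_compat; nra). nra. right; field; nra.
Qed.

Lemma Hnorm2_lim_Hscal Rad c H : 0 < Rad -> inH Rad H -> Hnorm2_lim Rad (Hscal c H) = c * c * Hnorm2_lim Rad H.
Proof.
  intros HR HH. unfold Hnorm2_lim at 1. apply seqlim_eq.
  apply is_lim_seq_ext with (fun k => (c * c) * Hnorm2 Rad (H k)).
  intros k. rewrite Hscal_lincomb, Hnorm2_scal; auto. apply inH_C1; auto.
  apply (is_lim_seq_scal_l _ (c*c) (Hnorm2_lim Rad H)). apply Hnorm2_cvg; auto.
Qed.

Lemma Hnorm_Hscal Rad c H : 0 < Rad -> inH Rad H -> Hnorm Rad (Hscal c H) = Rabs c * Hnorm Rad H.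
Proof.
  intros HR HH. rewrite !Hnorm_Hnorm2_lim by (auto; apply inH_Hscal; auto). rewrite Hnorm2_lim_Hscal by auto.
  rewrite sqrt_mult. rewrite <- Rsqr_def, sqrt_Rsqr_abs. auto. apply Rle_0_sqr. apply Hnorm2_lim_nonneg; auto.
Qed.

Section energy_lim_derivative.

Variables (Rad a1 a2 b K : R) (phi dphi : R -> R) (U : Hseq).
Hypotheses (HR : 0 < Rad) (Hp : deriv_lipschitz phi dphi K) (HU : inH Rad U).

Lemma energy_deriv_lim_additive H1 H2 : inH Rad H1 -> inH Rad H2 ->
  energy_deriv_lim Rad a1 a2 b dphi U (Hadd H1 H2) =
  energy_deriv_lim Rad a1 a2 b dphi U H1 + energy_deriv_lim Rad a1 a2 b dphi U H2.
Proof.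
  intros HH1 HH2. unfold energy_deriv_lim at 1. apply seqlim_eq.
  apply is_lim_seq_ext with (fun k => energy_deriv Rad a1 a2 b dphi (U k) (H1 k) + energy_deriv Rad a1 a2 b dphi (U k) (H2 k)).
  - intros k. rewrite Hadd_lincomb, (energy_deriv_lincomb Rad a1 a2 b phi dphi K); auto; try apply inH_C1; auto. ring.
  - apply is_lim_seq_plus'; apply (energy_deriv_cvg Rad a1 a2 b phi dphi K); auto.
Qed.

Lemma energy_deriv_lim_homogeneous c H : inH Rad H ->
  energy_deriv_lim Rad a1 a2 b dphi U (Hscal c H) = c * energy_deriv_lim Rad a1 a2 b dphi U H.
Proof.
  intros HH. unfold energy_deriv_lim at 1. apply seqlim_eq.
  apply is_lim_seq_ext with (fun k => c * energy_deriv Rad a1 a2 b dphi (U k) (H k)).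
  - intros k. rewrite Hscal_lincomb, (energy_deriv_lincomb Rad a1 a2 b phi dphi K); auto; try apply inH_C1; auto. ring.
  - apply (is_lim_seq_scal_l _ c (energy_deriv_lim Rad a1 a2 b dphi U H)).
    apply (energy_deriv_cvg Rad a1 a2 b phi dphi K); auto.
Qed.

Lemma energy_deriv_lim_bounded : exists C, forall H, inH Rad H ->
  Rabs (energy_deriv_lim Rad a1 a2 b dphi U H) <= C * Hnorm Rad H.
Proof.
  pose proof (dlip_K_nonneg _ _ _ Hp) as HK.
  destruct (inH_bounded Rad U HR HU) as [M [HM HMb]].
  set (C := deriv_const Rad a1 a2 b K * sqrt M). exists C. intros H HH.
  pose proof (deriv_const_nonneg Rad a1 a2 b K HR HK). pose proof (sqrt_pos M).
  assert (HC : 0 <= C) by (unfold C; nra).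
  assert (Hpt : forall k, Rabs (energy_deriv Rad a1 a2 b dphi (U k) (H k)) <= C * sqrt (Hnorm2 Rad (H k))).
  { intros k. eapply Rle_trans.
    - apply (energy_deriv_bound Rad a1 a2 b phi dphi K); auto; apply inH_C1; auto.
    - unfold C. apply Rmult_le_compat_r. apply sqrt_pos. apply Rmult_le_compat_l; auto.
      apply sqrt_le_1_alt; auto. }
  assert (Hsq : forall k, Rsqr (energy_deriv Rad a1 a2 b dphi (U k) (H k)) <= Rsqr C * Hnorm2 Rad (H k)).
  { intros k. rewrite Rsqr_abs, <- (sqrt_sqrt (Hnorm2 Rad (H k))) by (apply Hnorm2_nonneg; auto; apply inH_C1; auto).
    rewrite <- Rmult_assoc. fold (Rsqr C). replace (Rsqr C * sqrt (Hnorm2 Rad (H k)) * sqrt (Hnorm2 Rad (H k)))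
      with (Rsqr (C * sqrt (Hnorm2 Rad (H k)))) by (unfold Rsqr; ring).
    apply Rsqr_incr_1; auto. apply Rabs_pos. apply Rmult_le_pos; auto. apply sqrt_pos. }
  pose proof (energy_deriv_cvg Rad a1 a2 b phi dphi K U H HR Hp HU HH) as HL.
  pose proof (is_lim_seq_le _ _ _ _ Hsq (is_lim_seq_mult' _ _ _ _ HL HL)
    (is_lim_seq_scal_l _ (Rsqr C) _ (Hnorm2_cvg Rad H HR HH))) as Hle.
  simpl in Hle. fold (Rsqr (energy_deriv_lim Rad a1 a2 b dphi U H)) in Hle.
  rewrite Hnorm_Hnorm2_lim by auto. pose proof (Hnorm2_lim_nonneg Rad H HR HH).
  rewrite <- (sqrt_Rsqr C), <- sqrt_mult by (auto; apply Rle_0_sqr).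
  rewrite <- sqrt_Rsqr_abs. apply sqrt_le_1_alt. auto.
Qed.

Lemma energy_lim_remainder H : inH Rad H ->
  Rabs (energy_lim Rad a1 a2 b phi (Hadd U H) - energy_lim Rad a1 a2 b phi U - energy_deriv_lim Rad a1 a2 b dphi U H)
    <= taylor_const Rad a1 a2 b K * Hnorm2_lim Rad H.
Proof.
  intros HH.
  assert (HUH : inH Rad (Hadd U H)) by (apply inH_Hadd; auto).
  assert (Hx := is_lim_seq_minus' _ _ _ _ (is_lim_seq_minus' _ _ _ _ (energy_cvg Rad a1 a2 b phi dphi K _ HR Hp HUH)
    (energy_cvg Rad a1 a2 b phi dphi K _ HR Hp HU)) (energy_deriv_cvg Rad a1 a2 b phi dphi K U H HR Hp HU HH)).
  apply is_lim_seq_abs in Hx.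
  assert (Hpt : forall k, Rabs (energy Rad a1 a2 b phi (Hadd U H k) - energy Rad a1 a2 b phi (U k) - energy_deriv Rad a1 a2 b dphi (U k) (H k))
    <= taylor_const Rad a1 a2 b K * Hnorm2 Rad (H k)).
  { intros k. rewrite Hadd_lincomb. apply energy_taylor; auto; apply inH_C1; auto. }
  exact (is_lim_seq_le _ _ _ _ Hpt Hx (is_lim_seq_scal_l _ _ _ (Hnorm2_cvg Rad H HR HH))).
Qed.

Lemma is_Fderiv_energy_lim : is_Fderiv Rad (energy_lim Rad a1 a2 b phi) U (energy_deriv_lim Rad a1 a2 b dphi U).
Proof.
  split; [|split; [|split]].
  - exact energy_deriv_lim_additive.
  - exact energy_deriv_lim_homogeneous.
  - exact energy_deriv_lim_bounded.
  - intros eps He. pose proof (taylor_const_nonneg Rad a1 a2 b K HR (dlip_K_nonneg _ _ _ Hp)) as Hc.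
    set (c := taylor_const Rad a1 a2 b K) in *.
    exists (eps / (c + 1)). split. apply Rdiv_lt_0_compat; lra.
    intros H HH Hn. eapply Rle_trans. apply energy_lim_remainder; auto.
    rewrite Hnorm_Hnorm2_lim in Hn |- * by auto. pose proof (Hnorm2_lim_nonneg Rad H HR HH).
    set (h := sqrt (Hnorm2_lim Rad H)) in *. assert (0 <= h) by apply sqrt_pos.
    replace (Hnorm2_lim Rad H) with (h * h) by (unfold h; apply sqrt_sqrt; auto).
    assert (c * h <= eps).
    { apply Rle_trans with ((c + 1) * (eps / (c + 1))); [|right; field; lra].
      assert (0 <= eps / (c + 1)) by (apply Rlt_le, Rdiv_lt_0_compat; lra). nra. }
    fold c. nra.
Qed.

End energy_lim_derivative.

Lemma is_Fderiv_unique Rad F U L1 L2 : 0 < Rad -> inH Rad U -> is_Fderiv Rad F U L1 -> is_Fderiv Rad F U L2 ->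
  forall H, inH Rad H -> L1 H = L2 H.
Proof.
  intros HR HU [_ [S1 [_ R1]]] [_ [S2 [_ R2]]] H HH.
  destruct (Req_dec (L1 H) (L2 H)) as [e|ne]; auto. exfalso.
  set (d := L1 H - L2 H). assert (Hd : 0 < Rabs d) by (apply Rabs_pos_lt; unfold d; lra).
  set (h := Hnorm Rad H). assert (Hh : 0 <= h) by apply sqrt_pos.
  destruct Hh as [Hh|Hh].
  - set (eps := Rabs d / (4 * h)). assert (He : 0 < eps) by (unfold eps; apply Rdiv_lt_0_compat; lra).
    destruct (R1 eps He) as [d1 [Hd1 B1]]. destruct (R2 eps He) as [d2 [Hd2 B2]].
    set (de := Rmin d1 d2). assert (Hde : 0 < de) by (apply Rmin_pos; auto).
    set (t := de / (2 * h)). assert (Ht : 0 < t) by (unfold t; apply Rdiv_lt_0_compat; lra).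
    assert (HH' : inH Rad (Hscal t H)) by (apply inH_Hscal; auto).
    assert (Hn : Hnorm Rad (Hscal t H) = de / 2).
    { rewrite Hnorm_Hscal by auto. rewrite Rabs_right by lra. fold h. unfold t. field. lra. }
    assert (Hn1 : Hnorm Rad (Hscal t H) < d1) by (rewrite Hn; pose proof (Rmin_l d1 d2); unfold de in *; lra).
    assert (Hn2 : Hnorm Rad (Hscal t H) < d2) by (rewrite Hn; pose proof (Rmin_r d1 d2); unfold de in *; lra).
    specialize (B1 _ HH' Hn1). specialize (B2 _ HH' Hn2).
    rewrite S1, Hn in B1 by auto. rewrite S2, Hn in B2 by auto.
    assert (Rabs (t * d) <= 2 * (eps * (de / 2))).
    { replace (t * d) with ((F (Hadd U (Hscal t H)) - F U - t * L2 H) - (F (Hadd U (Hscal t H)) - F U - t * L1 H)) by (unfold d; ring).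
      eapply Rle_trans. apply Rabs_triang. rewrite Rabs_Ropp. lra. }
    rewrite Rabs_mult, (Rabs_right t) in H0 by lra.
    unfold t, eps in H0.
    assert (de / (2 * h) * Rabs d = de * Rabs d / (2 * h)) by (field; lra).
    assert (2 * (Rabs d / (4 * h) * (de / 2)) = de * Rabs d / (4 * h)) by (field; lra).
    rewrite H1, H2 in H0.
    assert (de * Rabs d / (4 * h) < de * Rabs d / (2 * h)).
    { unfold Rdiv. apply Rmult_lt_compat_l. nra. apply Rinv_lt_contravar; nra. }
    lra.
  - destruct (R1 1 ltac:(lra)) as [d1 [Hd1 B1]]. destruct (R2 1 ltac:(lra)) as [d2 [Hd2 B2]].
    assert (Hz : Hnorm Rad H = 0) by (unfold h in Hh; lra).
    specialize (B1 H HH ltac:(lra)). specialize (B2 H HH ltac:(lra)).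
    rewrite Hz, Rmult_0_r in B1, B2.
    assert (Rabs d <= 0).
    { replace d with ((F (Hadd U H) - F U - L2 H) - (F (Hadd U H) - F U - L1 H)) by (unfold d; ring).
      eapply Rle_trans. apply Rabs_triang. rewrite Rabs_Ropp. lra. }
    lra.
Qed.

Lemma is_Fderiv_ext Rad F1 F2 U L : 0 < Rad -> inH Rad U -> (forall X, inH Rad X -> F1 X = F2 X) ->
  is_Fderiv Rad F1 U L -> is_Fderiv Rad F2 U L.
Proof.
  intros HR HU E [A [B [C R]]]. split; [auto|split; [auto|split; [auto|]]].
  intros eps He. destruct (R eps He) as [d [Hd HB]]. exists d; split; auto.
  intros H HH Hn. rewrite <- !E; auto. apply inH_Hadd; auto.
Qed.

(** * The functionals I_kappa and gamma_kappa *)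

Lemma lipschitz_of_derive_bound (g dg : R -> R) K : (forall x, is_derive g x (dg x)) -> (forall x, Rabs (dg x) <= K) ->
  forall a b, Rabs (g a - g b) <= K * Rabs (a - b).
Proof.
  intros Hd Hb a b. destruct (MVT_gen g b a dg) as [c [Hc Ec]].
  - intros; apply Hd.
  - intros; apply continuity_pt_filterlim. apply (@ex_derive_continuous R_AbsRing R_NormedModule). eexists; apply Hd.
  - rewrite Ec, Rabs_mult. apply Rmult_le_compat_r. apply Rabs_pos. apply Hb.
Qed.

Definition phiI (al : R) s := / al ^ 2 * ln (1 + al * s ^ 2).
Definition dphiI (al : R) s := 2 * s / (al * (1 + al * s ^ 2)).
Definition phiG (al : R) s := / al * (s ^ 2 / (1 + al * s ^ 2)).
Definition dphiG (al : R) s := 2 * s / (al * (1 + al * s ^ 2) ^ 2).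

Lemma one_plus_sq_pos al s : 0 < al -> 0 < 1 + al * s ^ 2.
Proof. intros. assert (0 <= s ^ 2) by (rewrite <- Rsqr_pow2; apply Rle_0_sqr). nra. Qed.

Lemma deriv_lipschitz_phiI al : 0 < al -> deriv_lipschitz (phiI al) (dphiI al) (2 / al).
Proof.
  intros Ha. constructor.
  - intros s. unfold phiI, dphiI. pose proof (one_plus_sq_pos al s Ha). auto_derive. { simpl in H; lra. } simpl in *. field. repeat split; nra.
  - unfold dphiI. unfold Rdiv. ring.
  - apply lipschitz_of_derive_bound with (fun s => 2 * (1 - al * s ^ 2) / (al * (1 + al * s ^ 2) ^ 2)).
    + intros s. unfold dphiI. pose proof (one_plus_sq_pos al s Ha). auto_derive. { apply Rgt_not_eq. simpl in H. apply Rmult_lt_0_compat; lra. } simpl in *. field. repeat split; nra.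
    + intros s. pose proof (one_plus_sq_pos al s Ha). assert (0 <= al * s ^ 2) by (pose proof (one_plus_sq_pos al s Ha); rewrite <- Rsqr_pow2; apply Rmult_le_pos; [lra|apply Rle_0_sqr]).
      set (u := al * s ^ 2) in *.
      replace (2 * (1 - u) / (al * (1 + u) ^ 2)) with ((2 / al) * ((1 - u) / (1 + u) ^ 2)) by (field; split; lra).
      rewrite Rabs_mult, (Rabs_right (2 / al)) by (apply Rle_ge, Rlt_le, Rdiv_lt_0_compat; lra).
      rewrite <- (Rmult_1_r (2 / al)) at 2. apply Rmult_le_compat_l. apply Rlt_le, Rdiv_lt_0_compat; lra.
      unfold Rdiv. rewrite Rabs_mult, Rabs_inv, (Rabs_right ((1+u)^2)) by (apply Rle_ge; nra).
      apply Rmult_le_reg_r with ((1 + u) ^ 2). nra. rewrite Rmult_assoc, Rinv_l by nra.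
      unfold Rabs; destruct Rcase_abs; nra.
  - apply Rlt_le, Rdiv_lt_0_compat; lra.
Qed.

Lemma deriv_lipschitz_phiG al : 0 < al -> deriv_lipschitz (phiG al) (dphiG al) (6 / al).
Proof.
  intros Ha. constructor.
  - intros s. unfold phiG, dphiG. pose proof (one_plus_sq_pos al s Ha). auto_derive. { simpl in H; lra. } simpl in *. field. repeat split; nra.
  - unfold dphiG. unfold Rdiv. ring.
  - apply lipschitz_of_derive_bound with (fun s => 2 * (1 - 3 * (al * s ^ 2)) / (al * (1 + al * s ^ 2) ^ 3)).
    + intros s. unfold dphiG. pose proof (one_plus_sq_pos al s Ha). auto_derive. { apply Rgt_not_eq. simpl in H. apply Rmult_lt_0_compat; try lra. apply Rmult_lt_0_compat; nra. } simpl in *. field. repeat split; nra.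
    + intros s. pose proof (one_plus_sq_pos al s Ha). assert (0 <= al * s ^ 2) by (pose proof (one_plus_sq_pos al s Ha); rewrite <- Rsqr_pow2; apply Rmult_le_pos; [lra|apply Rle_0_sqr]).
      set (u := al * s ^ 2) in *.
      replace (2 * (1 - 3 * u) / (al * (1 + u) ^ 3)) with ((2 / al) * ((1 - 3 * u) / (1 + u) ^ 3)) by (field; split; lra).
      rewrite Rabs_mult, (Rabs_right (2 / al)) by (apply Rle_ge, Rlt_le, Rdiv_lt_0_compat; lra).
      replace (6 / al) with (2 / al * 3) by (field; lra).
      apply Rmult_le_compat_l. apply Rlt_le, Rdiv_lt_0_compat; lra.
      unfold Rdiv. rewrite Rabs_mult, Rabs_inv, (Rabs_right ((1+u)^3)) by (apply Rle_ge; nra).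
      apply Rmult_le_reg_r with ((1 + u) ^ 3). nra. rewrite Rmult_assoc, Rinv_l by nra.
      unfold Rabs; destruct Rcase_abs; nra.
  - apply Rlt_le, Rdiv_lt_0_compat; lra.
Qed.

Definition mass_coef al ka := -2 * (/ al - ka).

Lemma Ifun_energy n al ka Rad f : 0 < Rad -> 0 < al -> C1_0 Rad f ->
  Ifun n al ka Rad f = energy Rad 1 (IZR n ^ 2) (mass_coef al ka) (phiI al) f.
Proof.
  intros HR Ha Hf. unfold Ifun, energy, nl_energy, bform.
  rewrite (RInt_ext _ (fun r => 1 * bform_integrand 1 (IZR n ^ 2) (mass_coef al ka) f f r + 2 * (r * phiI al (f r))) 0 Rad).
  rewrite RInt_lincomb. lra. apply ex_RInt_bform_integrand; auto.
  apply ex_RInt_nl_energy; auto. eapply dlip_continuous. apply deriv_lipschitz_phiI; auto.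
  intros x Hx. unfold bform_integrand, phiI, mass_coef. Rring.
Qed.

Lemma gfun_energy n al ka Rad f : 0 < Rad -> 0 < al -> C1_0 Rad f ->
  gfun n al ka Rad f = energy Rad 1 (IZR n ^ 2) (mass_coef al ka) (phiG al) f.
Proof.
  intros HR Ha Hf. unfold gfun, energy, nl_energy, bform.
  rewrite (RInt_ext _ (fun r => 1 * bform_integrand 1 (IZR n ^ 2) (mass_coef al ka) f f r + 2 * (r * phiG al (f r))) 0 Rad).
  rewrite RInt_lincomb. lra. apply ex_RInt_bform_integrand; auto.
  apply ex_RInt_nl_energy; auto. eapply dlip_continuous. apply deriv_lipschitz_phiG; auto.
  intros x Hx. unfold bform_integrand, phiG, mass_coef. Rring.
Qed.

Lemma energy_deriv_phiI_self n al ka Rad f : 0 < Rad -> 0 < al -> C1_0 Rad f ->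
  energy_deriv Rad 1 (IZR n ^ 2) (mass_coef al ka) (dphiI al) f f = 2 * energy Rad 1 (IZR n ^ 2) (mass_coef al ka) (phiG al) f.
Proof.
  intros HR Ha Hf. unfold energy_deriv, energy, nl_deriv, nl_energy.
  rewrite (RInt_ext (fun r => r * dphiI al (f r) * f r) (fun r => 2 * (r * phiG al (f r))) 0 Rad).
  rewrite RInt_scal_R. lra. apply ex_RInt_nl_energy; auto. eapply dlip_continuous. apply deriv_lipschitz_phiG; auto.
  intros x Hx. unfold dphiI, phiG. pose proof (one_plus_sq_pos al (f x) Ha). change (@eq R (x * (2 * f x / (al * (1 + al * f x ^ 2))) * f x)
   (2 * (x * (/ al * (f x ^ 2 / (1 + al * f x ^ 2)))))). field. split; lra.
Qed.

Definition nehari_defect al (f : R -> R) := fun r => r * (f r ^ 4 / (1 + al * f r ^ 2) ^ 2).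

Lemma nehari_defect_pointwise al f r : 0 < al -> r * dphiG al (f r) * f r - 2 * (r * phiG al (f r)) = -2 * nehari_defect al f r.
Proof.
  intros Ha. unfold dphiG, phiG, nehari_defect. pose proof (one_plus_sq_pos al (f r) Ha). field. split; lra.
Qed.

Lemma ex_RInt_nehari_defect al Rad f : 0 < Rad -> 0 < al -> C1_0 Rad f -> ex_RInt (nehari_defect al f) 0 Rad.
Proof.
  intros HR Ha Hf.
  apply ex_RInt_ext with (fun r => (-1/2) * (1 * (r * dphiG al (f r) * f r) + (-2) * (r * phiG al (f r)))).
  intros x _. pose proof (nehari_defect_pointwise al f x Ha). lra.
  apply (ex_RInt_scal (V:=R_NormedModule)). apply ex_RInt_lincomb. apply ex_RInt_nl_deriv; auto. eapply dlip_deriv_continuous; apply deriv_lipschitz_phiG; auto.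
  apply ex_RInt_nl_energy; auto. eapply dlip_continuous; apply deriv_lipschitz_phiG; auto.
Qed.

Lemma energy_deriv_phiG_self n al ka Rad f : 0 < Rad -> 0 < al -> C1_0 Rad f ->
  energy_deriv Rad 1 (IZR n ^ 2) (mass_coef al ka) (dphiG al) f f - 2 * energy Rad 1 (IZR n ^ 2) (mass_coef al ka) (phiG al) f =
  -2 * RInt (nehari_defect al f) 0 Rad.
Proof.
  intros HR Ha Hf. unfold energy_deriv, energy, nl_deriv, nl_energy.
  assert (X1 : ex_RInt (fun r => r * dphiG al (f r) * f r) 0 Rad) by (apply ex_RInt_nl_deriv; auto; eapply dlip_deriv_continuous; apply deriv_lipschitz_phiG; auto).
  assert (X2 : ex_RInt (fun r => r * phiG al (f r)) 0 Rad) by (apply ex_RInt_nl_energy; auto; eapply dlip_continuous; apply deriv_lipschitz_phiG; auto).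
  transitivity (1 * RInt (fun r => r * dphiG al (f r) * f r) 0 Rad + (-2) * RInt (fun r => r * phiG al (f r)) 0 Rad). lra.
  rewrite <- RInt_lincomb by auto. rewrite <- RInt_scal_R by (apply ex_RInt_nehari_defect; auto).
  apply RInt_ext. intros x _. pose proof (nehari_defect_pointwise al f x Ha). lra.
Qed.

(* Young's inequality [q <= dl + q^2 / dl], then [q^2 <= A q^2 / (1 + al q)^2] while [q <= M]. *)
Lemma le_defect_pointwise al q M dl : 0 < al -> 0 <= q -> q <= M -> 0 < dl ->
  q <= dl + (1 + al * M) ^ 2 / dl * (q ^ 2 / (1 + al * q) ^ 2).
Proof.
  intros Ha Hq0 HqM Hd.
  set (u := 1 + al * q). assert (Hu : 1 <= u) by (unfold u; nra).
  assert (Hu2 : u <= 1 + al * M) by (unfold u; nra).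
  assert (HA : u ^ 2 <= (1 + al * M) ^ 2) by (simpl; nra).
  set (A := (1 + al * M) ^ 2) in *.
  assert (h2 : q <= dl + q ^ 2 / dl).
  { apply Rmult_le_reg_r with dl; auto. unfold Rdiv. rewrite Rmult_plus_distr_r, Rmult_assoc, Rinv_l by lra. nra. }
  assert (h3 : q ^ 2 <= A * (q ^ 2 / u ^ 2)).
  { apply Rmult_le_reg_r with (u ^ 2). nra.
    replace (A * (q ^ 2 / u ^ 2) * u ^ 2) with (A * q ^ 2) by (field; lra). nra. }
  assert (h4 : q ^ 2 / dl <= A / dl * (q ^ 2 / u ^ 2)).
  { unfold Rdiv at 1 2. replace (A * / dl * (q ^ 2 / u ^ 2)) with ((A * (q ^ 2 / u ^ 2)) * / dl) by ring.
    apply Rmult_le_compat_r. apply Rlt_le, Rinv_0_lt_compat; auto. auto. }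
  lra.
Qed.

Lemma weighted_L2_le_defect al Rad f M dl : 0 < Rad -> 0 < al -> C1_0 Rad f -> 0 <= M -> (forall r, 0 <= r <= Rad -> f r * f r <= M) -> 0 < dl ->
  bform Rad 0 0 1 f f <= Rad * dl * Rad + (1 + al * M) ^ 2 / dl * RInt (nehari_defect al f) 0 Rad.
Proof.
  intros HR Ha Hf HM Hb Hd.
  replace (Rad * dl * Rad) with ((Rad * dl) * RInt (fun _ => 1) 0 Rad) by (rewrite RInt_one; ring).
  rewrite <- RInt_lincomb. 2: apply (@ex_RInt_const R_CompleteNormedModule). 2: apply ex_RInt_nehari_defect; auto.
  apply RInt_le. lra. apply ex_RInt_bform_integrand; auto.
  apply ex_RInt_lincomb. apply (@ex_RInt_const R_CompleteNormedModule). apply ex_RInt_nehari_defect; auto.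
  intros r Hr. unfold bform_integrand, nehari_defect.
  pose proof (le_defect_pointwise al (f r ^ 2) M dl Ha) as Hq.
  replace ((f r ^ 2) ^ 2) with (f r ^ 4) in Hq by ring.
  assert (0 <= f r ^ 2 <= M) by (split; [nra | specialize (Hb r ltac:(lra)); nra]).
  apply Rle_trans with (r * (dl + (1 + al * M) ^ 2 / dl * (f r ^ 4 / (1 + al * f r ^ 2) ^ 2))).
  - replace (0 * (r * Derive f r * Derive f r) + 0 * (f r * f r / r) + 1 * (r * f r * f r)) with (r * f r ^ 2) by ring.
    apply Rmult_le_compat_l; [lra | apply Hq; lra].
  - assert (r * dl <= Rad * dl * 1) by nra. lra.
Qed.

Lemma one_le_IZR_sq n : (1 <= Z.abs n)%Z -> 1 <= IZR n ^ 2.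
Proof.
  intros H. destruct (Z_le_gt_dec 1 n) as [H1|H1].
  - apply IZR_le in H1. simpl. nra.
  - assert (n <= -1)%Z by lia. apply IZR_le in H0. simpl. nra.
Qed.

Lemma nl_energy_phiG_nonneg al Rad f : 0 < Rad -> 0 < al -> C1_0 Rad f -> 0 <= nl_energy Rad (phiG al) f.
Proof.
  intros HR Ha Hf. unfold nl_energy. apply RInt_ge_0. lra. apply ex_RInt_nl_energy; auto. eapply dlip_continuous; apply deriv_lipschitz_phiG; auto.
  intros x Hx. unfold phiG. pose proof (one_plus_sq_pos al (f x) Ha).
  apply Rmult_le_pos. lra. apply Rmult_le_pos. apply Rlt_le, Rinv_0_lt_compat; auto.
  apply Rdiv_le_0_compat; [|lra]. rewrite <- Rsqr_pow2; apply Rle_0_sqr.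
Qed.

Section nehari_manifold.

Variables (n : Z) (alpha kappa Rad : R).
Hypotheses (hn : (1 <= Z.abs n)%Z) (ha : 0 < alpha) (hR : 0 < Rad).

Let b := mass_coef alpha kappa.

(* Only the [r u^2] term of [gamma] can be negative; it is controlled by the defect. *)
Lemma Hnorm2_le_gamma_defect f M dl : C1_0 Rad f -> 0 <= M -> Hnorm2 Rad f <= M -> 0 < dl ->
  Hnorm2 Rad f <= 2 * energy Rad 1 (IZR n ^ 2) b (phiG alpha) f + Rabs b * (Rad * dl * Rad) +
     Rabs b * ((1 + alpha * M) ^ 2 / dl) * RInt (nehari_defect alpha f) 0 Rad.
Proof.
  intros Hf HM HNM Hd.
  pose proof (one_le_IZR_sq n hn) as Hn2.
  assert (Hs : forall r, 0 <= r <= Rad -> f r * f r <= M).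
  { intros r Hr; apply Rle_trans with (Hnorm2 Rad f); [apply sq_le_Hnorm2; auto | exact HNM]. }
  pose proof (weighted_L2_le_defect alpha Rad f M dl hR ha Hf HM Hs Hd) as HW.
  pose proof (bform_nonneg Rad 0 0 1 f hR Hf ltac:(lra) ltac:(lra) ltac:(lra)) as HW0.
  pose proof (bform_nonneg Rad 0 1 0 f hR Hf ltac:(lra) ltac:(lra) ltac:(lra)) as HP0.
  assert (ED : bform Rad 1 (IZR n ^ 2) b f f = Hnorm2 Rad f + (IZR n ^ 2 - 1) * bform Rad 0 1 0 f f + b * bform Rad 0 0 1 f f).
  { rewrite !Hnorm2_bform, (bform_decomp Rad 1 (IZR n ^ 2) b), (bform_decomp Rad 1 1 0),
      (bform_decomp Rad 0 1 0), (bform_decomp Rad 0 0 1); auto. ring. }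
  pose proof (nl_energy_phiG_nonneg alpha Rad f hR ha Hf).
  unfold energy.
  assert (0 <= (IZR n ^ 2 - 1) * bform Rad 0 1 0 f f) by (apply Rmult_le_pos; lra).
  assert (- Rabs b * bform Rad 0 0 1 f f <= b * bform Rad 0 0 1 f f).
  { apply Rmult_le_compat_r; auto. pose proof (Rabs_pos b). unfold Rabs in *; destruct Rcase_abs; lra. }
  assert (Rabs b * bform Rad 0 0 1 f f <= Rabs b * (Rad * dl * Rad + (1 + alpha * M) ^ 2 / dl * RInt (nehari_defect alpha f) 0 Rad)).
  { apply Rmult_le_compat_l; auto. apply Rabs_pos. }
  lra.
Qed.

Lemma nehari_defect_cvg_0 U : inH Rad U ->
  energy_lim Rad 1 (IZR n ^ 2) b (phiG alpha) U = 0 ->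
  energy_deriv_lim Rad 1 (IZR n ^ 2) b (dphiG alpha) U U = 0 ->
  is_lim_seq (fun k => RInt (nehari_defect alpha (U k)) 0 Rad) 0.
Proof.
  intros HU HE HL.
  pose proof (deriv_lipschitz_phiG alpha ha) as Hp.
  assert (HF := energy_cvg Rad 1 (IZR n ^ 2) b _ _ _ U hR Hp HU). rewrite HE in HF.
  assert (HLc := energy_deriv_cvg Rad 1 (IZR n ^ 2) b _ _ _ U U hR Hp HU HU). rewrite HL in HLc.
  apply is_lim_seq_ext with (fun k => / 2 * (2 * energy Rad 1 (IZR n ^ 2) b (phiG alpha) (U k)
    - energy_deriv Rad 1 (IZR n ^ 2) b (dphiG alpha) (U k) (U k))).
  - intros k. pose proof (energy_deriv_phiG_self n alpha kappa Rad (U k) hR ha (inH_C1 Rad U k HU)). fold b in H. lra.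
  - replace 0 with (/ 2 * (2 * 0 - 0)) by ring.
    apply (is_lim_seq_scal_l _ (/2) (2 * 0 - 0)). apply is_lim_seq_minus'; auto.
    apply (is_lim_seq_scal_l _ 2 0). auto.
Qed.

(* If [gamma'(u) u] vanished on [M], the defect would tend to [0], and [Hnorm2_le_gamma_defect]
   with [dl] small compared to [|u|^2] would give [|u|^2 <= |u|^2 / 4]. *)
Lemma energy_deriv_phiG_self_neq0 U : inH Rad U -> Hnorm Rad U <> 0 ->
  energy_lim Rad 1 (IZR n ^ 2) b (phiG alpha) U = 0 -> energy_deriv_lim Rad 1 (IZR n ^ 2) b (dphiG alpha) U U <> 0.
Proof.
  intros HU HnU HE HL.
  assert (Hnl : 0 < Hnorm2_lim Rad U).
  { rewrite Hnorm_Hnorm2_lim in HnU by auto. destruct (Hnorm2_lim_nonneg Rad U hR HU) as [H|H]; auto.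
    rewrite <- H, sqrt_0 in HnU. lra. }
  destruct (inH_bounded Rad U hR HU) as [M [HM HMb]].
  set (c := Rabs b * Rad * Rad).
  assert (Hc : 0 <= c) by (apply Rmult_le_pos; [apply Rmult_le_pos; [apply Rabs_pos|]|]; lra).
  set (dl := Hnorm2_lim Rad U / (4 * (c + 1))).
  assert (Hdl : 0 < dl) by (unfold dl; apply Rdiv_lt_0_compat; lra).
  set (Cd := Rabs b * ((1 + alpha * M) ^ 2 / dl)).
  assert (Hpt : forall k, Hnorm2 Rad (U k) <= 2 * energy Rad 1 (IZR n ^ 2) b (phiG alpha) (U k)
    + Rabs b * (Rad * dl * Rad) + Cd * RInt (nehari_defect alpha (U k)) 0 Rad).
  { intros k. apply Hnorm2_le_gamma_defect; auto. apply inH_C1; auto. }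
  assert (HR' : is_lim_seq (fun k => 2 * energy Rad 1 (IZR n ^ 2) b (phiG alpha) (U k)
    + Rabs b * (Rad * dl * Rad) + Cd * RInt (nehari_defect alpha (U k)) 0 Rad) (2 * 0 + Rabs b * (Rad * dl * Rad) + Cd * 0)).
  { pose proof (energy_cvg Rad 1 (IZR n ^ 2) b _ _ _ U hR (deriv_lipschitz_phiG alpha ha) HU) as HF. rewrite HE in HF.
    apply is_lim_seq_plus'. apply is_lim_seq_plus'. apply (is_lim_seq_scal_l _ 2 0). auto. apply is_lim_seq_const.
    apply (is_lim_seq_scal_l _ Cd 0). apply nehari_defect_cvg_0; auto. }
  pose proof (is_lim_seq_le _ _ _ _ Hpt (Hnorm2_cvg Rad U hR HU) HR') as Hle. simpl in Hle.
  replace (Rabs b * (Rad * dl * Rad)) with (c * dl) in Hle by (unfold c; ring).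
  assert (c * dl = c * Hnorm2_lim Rad U / (4 * (c + 1))) by (unfold dl; field; lra).
  assert (c * Hnorm2_lim Rad U / (4 * (c + 1)) <= Hnorm2_lim Rad U / 4).
  { apply Rmult_le_reg_r with (4 * (c + 1)). lra.
    replace (c * Hnorm2_lim Rad U / (4 * (c + 1)) * (4 * (c + 1))) with (c * Hnorm2_lim Rad U) by (field; lra).
    replace (Hnorm2_lim Rad U / 4 * (4 * (c + 1))) with ((c + 1) * Hnorm2_lim Rad U) by (field; lra). nra. }
  lra.
Qed.

Lemma IE_energy_lim X : inH Rad X -> IE n alpha kappa Rad X = energy_lim Rad 1 (IZR n ^ 2) b (phiI alpha) X.
Proof.
  intros HX. unfold IE, energy_lim, seqlim. f_equal. apply Lim_seq_ext. intros k.
  apply Ifun_energy; auto. apply inH_C1; auto.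
Qed.

Lemma GE_energy_lim X : inH Rad X -> GE n alpha kappa Rad X = energy_lim Rad 1 (IZR n ^ 2) b (phiG alpha) X.
Proof.
  intros HX. unfold GE, energy_lim, seqlim. f_equal. apply Lim_seq_ext. intros k.
  apply gfun_energy; auto. apply inH_C1; auto.
Qed.

Lemma is_Fderiv_IE U : inH Rad U ->
  is_Fderiv Rad (IE n alpha kappa Rad) U (energy_deriv_lim Rad 1 (IZR n ^ 2) b (dphiI alpha) U).
Proof.
  intros HU. apply is_Fderiv_ext with (energy_lim Rad 1 (IZR n ^ 2) b (phiI alpha)); auto.
  - intros X HX. symmetry. apply IE_energy_lim; auto.
  - apply is_Fderiv_energy_lim with (2 / alpha); auto. apply deriv_lipschitz_phiI; auto.
Qed.

Lemma is_Fderiv_GE U : inH Rad U ->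
  is_Fderiv Rad (GE n alpha kappa Rad) U (energy_deriv_lim Rad 1 (IZR n ^ 2) b (dphiG alpha) U).
Proof.
  intros HU. apply is_Fderiv_ext with (energy_lim Rad 1 (IZR n ^ 2) b (phiG alpha)); auto.
  - intros X HX. symmetry. apply GE_energy_lim; auto.
  - apply is_Fderiv_energy_lim with (6 / alpha); auto. apply deriv_lipschitz_phiG; auto.
Qed.

Lemma IE_deriv_self U : inH Rad U ->
  energy_deriv_lim Rad 1 (IZR n ^ 2) b (dphiI alpha) U U = 2 * GE n alpha kappa Rad U.
Proof.
  intros HU. rewrite GE_energy_lim by auto. unfold energy_deriv_lim. apply seqlim_eq.
  apply is_lim_seq_ext with (fun k => 2 * energy Rad 1 (IZR n ^ 2) b (phiG alpha) (U k)).
  - intros k. symmetry. apply energy_deriv_phiI_self; auto. apply inH_C1; auto.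
  - apply (is_lim_seq_scal_l _ 2 (energy_lim Rad 1 (IZR n ^ 2) b (phiG alpha) U)).
    apply energy_cvg with (dphiG alpha) (6 / alpha); auto. apply deriv_lipschitz_phiG; auto.
Qed.

Lemma GE_deriv_self_neq0 U : inH Rad U -> inM n alpha kappa Rad U ->
  energy_deriv_lim Rad 1 (IZR n ^ 2) b (dphiG alpha) U U <> 0.
Proof.
  intros HU [Hn HG]. apply energy_deriv_phiG_self_neq0; auto. rewrite <- GE_energy_lim; auto.
Qed.

End nehari_manifold.

Theorem lemma4p1 (n : Z) (alpha Rad kappa : R)
  (hn : (1 <= Z.abs n)%Z) (ha : 0 < alpha) (hR : 0 < Rad)
  (U : Hseq) (hU : inH Rad U) :
  nontrivial_crit n alpha kappa Rad U <->
  (inM n alpha kappa Rad U /\ crit_on_M n alpha kappa Rad U).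
Proof.
  pose proof (is_Fderiv_IE n alpha kappa Rad ha hR U hU) as FI.
  pose proof (is_Fderiv_GE n alpha kappa Rad ha hR U hU) as FG.
  pose proof (IE_deriv_self n alpha kappa Rad ha hR U hU) as KEY.
  split.
  - intros [Hn [L [HL HL0]]].
    rewrite <- (is_Fderiv_unique _ _ _ _ _ hR hU HL FI U hU), HL0 in KEY by auto.
    assert (HM : inM n alpha kappa Rad U) by (split; [auto | lra]).
    split; [|split]; auto.
    exists 0, L, (energy_deriv_lim Rad 1 (IZR n ^ 2) (mass_coef alpha kappa) (dphiG alpha) U).
    split; [|split]; auto. intros H HH. rewrite HL0 by auto. ring.
  - intros [HM [_ [xi [L1 [L2 [H1 [H2 H3]]]]]]].
    split; [apply HM|]. exists L1. split; auto.
    assert (Hxi : xi = 0).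
    { rewrite <- (is_Fderiv_unique _ _ _ _ _ hR hU H1 FI U hU), H3, (proj2 HM),
        (is_Fderiv_unique _ _ _ _ _ hR hU H2 FG U hU) in KEY by auto.
      destruct (Rmult_integral _ _ (eq_trans KEY (Rmult_0_r 2))) as [E|E]; auto.
      exfalso. exact (GE_deriv_self_neq0 n alpha kappa Rad hn ha hR U hU HM E). }
    intros H HH. rewrite H3, Hxi by auto. ring.
Qed.
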